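(* Let $A,B\in\mathbb{M}_n$ be Hermitian matrices with $\sigma(A)\cup\sigma(B)\subset\mathbb{D}$, let $f,g\in\mathfrak{H}$, and let $X\in\mathbb{M}_n$. Then $$\|f(A)X\pm Xg(B)\|_2\le\left\|\frac{X+|A|X}{d_A}+\frac{X+X|B|}{d_B}\right\|_2$$ and $$\|f(A)Xg(B)\pm X\|_2\le\left\|\frac{I+|A|}{d_A}\,X\,\frac{I+|B|}{d_B}+X\right\|_2.$$
   Context: $\mathbb{M}_n$ is the algebra of $n\times n$ complex matrices; $\|\cdot\|_2$ is the Hilbert–Schmidt (Frobenius) norm; $|T|=(T^*T)^{1/2}$. $\mathbb{D}$ is the open unit disk, $d_A=\mathrm{dist}(\partial\mathbb{D},\sigma(A))$. $\mathfrak{H}$ is the set of analytic $f:\mathbb{D}\to\mathbb{C}$ with $\operatorname{Re}f>0$ and $f(0)=1$; $f(A)$ is defined by the functional calculus (for Hermitian $A=U\operatorname{diag}(\lambda_j)U^*$, $f(A)=U\operatorname{diag}(f(\lambda_j))U^*$). *)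

From Stdlib Require Import Reals Lra Lia.
Open Scope R_scope.

Definition Cx : Type := (R * R)%type.
Definition Cre (z : Cx) : R := fst z.
Definition Cim (z : Cx) : R := snd z.
Definition RtoC (r : R) : Cx := (r, 0).
Definition C0 : Cx := (0, 0).
Definition C1 : Cx := (1, 0).
Definition Cadd (z w : Cx) : Cx := (Cre z + Cre w, Cim z + Cim w).
Definition Copp (z : Cx) : Cx := (- Cre z, - Cim z).
Definition Csub (z w : Cx) : Cx := Cadd z (Copp w).
Definition Cmul (z w : Cx) : Cx :=
  (Cre z * Cre w - Cim z * Cim w, Cre z * Cim w + Cim z * Cre w).
Definition Cconj (z : Cx) : Cx := (Cre z, - Cim z).
Definition Cnorm (z : Cx) : R := sqrt (Cre z ^ 2 + Cim z ^ 2).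
Fixpoint Cpow (z : Cx) (k : nat) : Cx :=
  match k with O => C1 | S k' => Cmul (Cpow z k') z end.

Fixpoint Csum (k : nat) (F : nat -> Cx) : Cx :=
  match k with O => C0 | S k' => Cadd (Csum k' F) (F k') end.
Fixpoint Rsum (k : nat) (F : nat -> R) : R :=
  match k with O => 0 | S k' => Rsum k' F + F k' end.

Definition series_conv (a : nat -> Cx) (l : Cx) : Prop :=
  forall eps, eps > 0 -> exists N : nat, forall m : nat, (N <= m)%nat ->
    Cnorm (Csub (Csum m a) l) < eps.

Definition analytic_on_disk (f : Cx -> Cx) : Prop :=
  forall z0, Cnorm z0 < 1 ->
    exists r, r > 0 /\ exists c : nat -> Cx,
      forall z, Cnorm z < 1 -> Cnorm (Csub z z0) < r ->
        series_conv (fun k => Cmul (c k) (Cpow (Csub z z0) k)) (f z).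

Definition classH (f : Cx -> Cx) : Prop :=
  analytic_on_disk f /\
  (forall z, Cnorm z < 1 -> Cre (f z) > 0) /\
  f C0 = C1.

(* ---------- n x n complex matrices (entries with indices < n matter) ---------- *)
Definition Mat : Type := nat -> nat -> Cx.
Definition mmul (n : nat) (A B : Mat) : Mat :=
  fun i j => Csum n (fun k => Cmul (A i k) (B k j)).
Definition madj (A : Mat) : Mat := fun i j => Cconj (A j i).
Definition madd (A B : Mat) : Mat := fun i j => Cadd (A i j) (B i j).
Definition msub (A B : Mat) : Mat := fun i j => Csub (A i j) (B i j).
Definition mscale (r : R) (A : Mat) : Mat := fun i j => Cmul (RtoC r) (A i j).
Definition mid : Mat := fun i j => if Nat.eqb i j then C1 else C0.
Definition mdiag (d : nat -> Cx) : Mat := fun i j => if Nat.eqb i j then d i else C0.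
Definition meq (n : nat) (A B : Mat) : Prop :=
  forall i j, (i < n)%nat -> (j < n)%nat -> A i j = B i j.

Definition hermitian (n : nat) (A : Mat) : Prop := meq n (madj A) A.
Definition unitary (n : nat) (U : Mat) : Prop :=
  meq n (mmul n (madj U) U) mid /\ meq n (mmul n U (madj U)) mid.

Definition hs_norm (n : nat) (M : Mat) : R :=
  sqrt (Rsum n (fun i => Rsum n (fun j => Cnorm (M i j) ^ 2))).

Definition fcalc (n : nat) (U : Mat) (lam : nat -> R) (h : Cx -> Cx) : Mat :=
  mmul n (mmul n U (mdiag (fun j => h (RtoC (lam j))))) (madj U).

(* |A| = (A^*A)^{1/2} for A = U diag(lam) U^*: since A^*A = U diag(lam_j^2) U^*,
   the functional calculus gives U diag(sqrt(lam_j^2)) U^*. *)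
Definition mabs (n : nat) (U : Mat) (lam : nat -> R) : Mat :=
  mmul n (mmul n U (mdiag (fun j => RtoC (sqrt (lam j ^ 2))))) (madj U).

Definition dist_circle (z : Cx) : R := 1 - Cnorm z.

(* d_A = dist(boundary D, sigma(A)) = min_j dist_circle(lam_j), sigma(A) = {lam_j : j < n}.
   (The base value 1 is an upper bound of every term, so it does not affect
   the minimum when n >= 1.) *)
Fixpoint mindist (k : nat) (lam : nat -> R) : R :=
  match k with
  | O => 1
  | S k' => Rmin (mindist k' lam) (dist_circle (RtoC (lam k')))
  end.
Definition dA (n : nat) (lam : nat -> R) : R := mindist n lam.

(* Every f of class H satisfies |f z| <= (1 + |z|) / (1 - |z|).  This is Schwarz's lemma for the
   Cayley transform phi = (f - 1) / (f + 1), which maps the disk into itself and vanishes at 0: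
   the quotient h = phi / z satisfies |h| <= 1.  On each closed disk |z| <= rho, |h| attains its
   maximum; at an interior maximum where h = g <> 0, h is locally constant, for otherwise the first
   nonzero Taylor coefficient of (1 - g z) f - (1 + g z) would give a direction in which |h|
   increases.  Moving along the segment to rho carries the value g to the boundary, where
   |h| < 1 / rho.
   In the eigenbases, Y = U^* X V, every matrix in the statement acts on Y by diagonal
   multiplications, and both inequalities reduce entrywise to |f(lambda_i)| <= (1 + |lambda_i|) / d_A
   and its analogue for g. *)

From Stdlib Require Import Reals Lra Lia Wf_nat Classical ClassicalEpsilon FunctionalExtensionality List Setoid.
From Coquelicot Require Import Coquelicot.
From Pilot Require Import Defs.
Open Scope R_scope.

(* [Defs] shadows Coquelicot's [RtoC] and [Cconj]. *)
Notation CR := Complex.RtoC.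
Notation Cconj := Complex.Cconj.

(** * Complex numbers *)

(* The hand-made complex numbers of [Defs] are definitionally Coquelicot's. *)
Ltac coquelicot_ops :=
  change Cmul with Cmult in *; change Cadd with Cplus in *;
  change Csub with Cminus in *; change Defs.Copp with Complex.Copp in *;
  change Cnorm with Cmod in *; change Defs.Cconj with Complex.Cconj in *;
  change Defs.RtoC with Complex.RtoC in *;
  change Cre with Re in *; change Cim with Im in *;
  change C0 with (CR 0) in *; change C1 with (CR 1) in *.

(* [ring] and [field] are declared on [C], not on its alias [Cx]. *)
Ltac Cring := match goal with |- @eq _ ?a ?b => change (@eq C a b) end; ring.
Ltac Cfield := match goal with |- @eq _ ?a ?b => change (@eq C a b) end; field.

Lemma Defs_Cpow_eq_pow (z : C) k : Defs.Cpow z k = (z ^ k)%C.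
Proof.
  induction k as [|k IH]; [reflexivity|].
  change (Defs.Cpow z (S k)) with (Cmul (Defs.Cpow z k) z).
  rewrite IH. coquelicot_ops. simpl. Cring.
Qed.

Lemma Csum_S k (F : nat -> C) : Csum (S k) F = (Csum k F + F k)%C.
Proof. reflexivity. Qed.

Lemma Csum_zero m (F : nat -> C) : (forall j, (j < m)%nat -> F j = CR 0) -> Csum m F = CR 0.
Proof.
  induction m as [|m IH]; intros H; [reflexivity|].
  rewrite Csum_S, IH, (H m) by (auto; lia). Cring.
Qed.

Lemma Cmod_sub_le (x y : C) : Cmod (x - y) <= Cmod x + Cmod y.
Proof. unfold Cminus. rewrite <- (Cmod_opp y). apply Cmod_triangle. Qed.

Lemma Cmod_sub_sym (a b : C) : Cmod (a - b) = Cmod (b - a).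
Proof. replace (a - b)%C with (- (b - a))%C by Cring. apply Cmod_opp. Qed.

Lemma Cmod_sub_triangle (a b c : C) : Cmod (a - c) <= Cmod (a - b) + Cmod (b - c).
Proof. replace (a - c)%C with ((a - b) + (b - c))%C by Cring. apply Cmod_triangle. Qed.

Lemma Cmod_reverse_triangle (a b : C) : Rabs (Cmod a - Cmod b) <= Cmod (a - b).
Proof.
  pose proof (Cmod_triangle (a - b) b) as H1. pose proof (Cmod_triangle (b - a) a) as H2.
  replace (a - b + b)%C with a in H1 by Cring. replace (b - a + a)%C with b in H2 by Cring.
  rewrite Cmod_sub_sym in H2. unfold Rabs. destruct Rcase_abs; lra.
Qed.

Lemma Cmod_scale_nonneg (c : R) (y : C) : 0 <= c -> Cmod (CR c * y) = c * Cmod y.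
Proof. intros H. rewrite Cmod_mult, Cmod_R, Rabs_pos_eq; auto. Qed.

Lemma Re_ge_neg_Cmod (x : C) : - Cmod x <= Re x.
Proof.
  pose proof (re_le_Cmod x). pose proof (Rabs_le_between (Re x) (Cmod x)). unfold Rabs in *. destruct Rcase_abs; lra.
Qed.

Lemma Re_le_Cmod (x : C) : Re x <= Cmod x.
Proof. pose proof (re_le_Cmod x). pose proof (Rle_abs (Re x)). lra. Qed.

Lemma Re_conj_nonpos_of_Cmod_le (a b : C) : Cmod (a + b) <= Cmod a -> Re (Cconj a * b) <= 0.
Proof.
  intros H. assert (Cmod (a + b) ^ 2 <= Cmod a ^ 2) by (pose proof (Cmod_ge_0 (a + b)); nra).
  rewrite !Cmod2_alt in H0. destruct a as [a1 a2], b as [b1 b2].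
  unfold Re, Im, Cplus, Cmult, Complex.Cconj in *; simpl in *. nra.
Qed.

(** * Power series *)

Lemma Rsum_nonneg (a : nat -> R) N : (forall i, 0 <= a i) -> 0 <= Rsum N a.
Proof. intros Hp; induction N; simpl. lra. specialize (Hp N). lra. Qed.

Lemma Rsum_ge_term (a : nat -> R) N k : (forall i, 0 <= a i) -> (k < N)%nat -> a k <= Rsum N a.
Proof.
  intros Hp Hk. induction N as [|N IH]; [lia|]. simpl.
  destruct (Nat.eq_dec k N) as [->|Hne].
  - pose proof (Rsum_nonneg a N Hp). lra.
  - specialize (IH ltac:(lia)). specialize (Hp N). lra.
Qed.

Lemma series_conv_terms_bounded (a : nat -> C) L :
  series_conv a L -> exists B, forall k, Cmod (a k) <= B.
Proof.
  intros H. destruct (H 1 ltac:(lra)) as [N HN]. coquelicot_ops.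
  exists (2 + Rsum N (fun k => Cmod (a k))). intros k.
  pose proof (Rsum_nonneg (fun k => Cmod (a k)) N (fun i => Cmod_ge_0 _)).
  destruct (Compare_dec.le_lt_dec N k) as [HNk|HkN].
  - (* a k is the difference of two partial sums close to L *)
    pose proof (HN k HNk). pose proof (HN (S k) ltac:(lia)) as HSk. rewrite Csum_S in HSk.
    pose proof (Cmod_sub_le (Csum k a + a k - L) (Csum k a - L))%C.
    replace (Csum k a + a k - L - (Csum k a - L))%C with (a k) in * by Cring. lra.
  - pose proof (Rsum_ge_term (fun k => Cmod (a k)) N k (fun i => Cmod_ge_0 _) HkN). lra.
Qed.

Lemma le_of_forall_lt_plus (x y : R) : (forall e, e > 0 -> x < y + e) -> x <= y.
Proof. intros H. destruct (Rle_dec x y); auto. specialize (H ((x - y) / 2) ltac:(lra)). lra. Qed.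

Lemma series_conv_dist_le (a : nat -> C) L P e : series_conv a L ->
  (exists N, forall M, (N <= M)%nat -> Cmod (Csum M a - P) <= e) -> Cmod (L - P) <= e.
Proof.
  intros H [N HN]. apply le_of_forall_lt_plus. intros eps Heps.
  destruct (H eps Heps) as [N1 HN1]. coquelicot_ops.
  specialize (HN1 (max N N1) ltac:(lia)). specialize (HN (max N N1) ltac:(lia)).
  rewrite Cmod_sub_sym in HN1. pose proof (Cmod_sub_triangle L (Csum (max N N1) a) P). lra.
Qed.

Lemma le_0_of_le_geometric (x D q : R) : 0 <= q < 1 -> (forall M, x <= D * q ^ S M) -> x <= 0.
Proof.
  intros Hq H. apply Rnot_lt_le. intros Hx.
  destruct (pow_lt_1_zero q ltac:(rewrite Rabs_pos_eq; lra) (x / (Rabs D + 1))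
              ltac:(apply Rdiv_lt_0_compat; pose proof (Rabs_pos D); lra)) as [N HN].
  specialize (HN (S N) ltac:(lia)). rewrite Rabs_pos_eq in HN by (apply pow_le; lra).
  specialize (H N). pose proof (Rle_abs D). pose proof (Rabs_pos D). pose proof (pow_le q (S N) (proj1 Hq)).
  assert (D * q ^ S N <= Rabs D * q ^ S N) by (apply Rmult_le_compat_r; lra).
  assert (Rabs D * q ^ S N <= Rabs D * (x / (Rabs D + 1))) by (apply Rmult_le_compat_l; lra).
  assert (Rabs D * (x / (Rabs D + 1)) < x).
  { apply (Rmult_lt_reg_r (Rabs D + 1)); [lra|]. field_simplify; lra. }
  lra.
Qed.

Section PowerSeriesRemainder.

Variables (c : nat -> C) (w : C) (s B : R).
Hypothesis (Hs : 0 < s) (Hc : forall k, Cmod (c k) * s ^ k <= B) (Hw : Cmod w <= s / 2).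

Let q := Cmod w / s.
Let a := fun k => (c k * w ^ k)%C.

Let B_nonneg : 0 <= B.
Proof. pose proof (Hc 0%nat). pose proof (Cmod_ge_0 (c 0%nat)). simpl in *. lra. Qed.

Lemma power_series_term_bound k : Cmod (a k) <= B * q ^ k.
Proof.
  unfold a, q. rewrite Cmod_mult, Cmod_pow.
  replace (Cmod w) with (Cmod w / s * s) at 1 by (field; lra).
  rewrite Rpow_mult_distr.
  pose proof (Cmod_ge_0 (c k)).
  pose proof (pow_le (Cmod w / s) k ltac:(apply Rdiv_le_0_compat; [apply Cmod_ge_0 | lra])).
  specialize (Hc k). nra.
Qed.

(* The factor 2 is 1/(1 - q) for q <= 1/2. *)
Lemma power_series_partial_tail m j :
  Cmod (Csum (S m + j) a - Csum (S m) a) <= 2 * B * (q ^ S m - q ^ (S m + j)).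
Proof.
  assert (Hq : 0 <= q <= 1 / 2).
  { unfold q. split. apply Rdiv_le_0_compat; [apply Cmod_ge_0|lra].
    apply (Rmult_le_reg_r s); [lra|]. field_simplify; lra. }
  induction j as [|j IH].
  - rewrite Nat.add_0_r. replace (Csum (S m) a - Csum (S m) a)%C with (CR 0) by Cring.
    rewrite Cmod_0. lra.
  - rewrite Nat.add_succ_r, Csum_S.
    replace (Csum (S m + j) a + a (S m + j)%nat - Csum (S m) a)%C
      with ((Csum (S m + j) a - Csum (S m) a) + a (S m + j)%nat)%C by Cring.
    eapply Rle_trans; [apply Cmod_triangle|].
    pose proof (power_series_term_bound (S m + j)).
    pose proof (pow_le q (S m + j) (proj1 Hq)).
    replace (q ^ S (S m + j)) with (q * q ^ (S m + j)) by reflexivity.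
    pose proof B_nonneg.
    assert (0 <= B * q ^ (S m + j) * (1 - 2 * q)) by (apply Rmult_le_pos; [apply Rmult_le_pos|]; lra).
    lra.
Qed.

Lemma power_series_remainder L m : series_conv a L ->
  Cmod (L - Csum (S m) a) <= 2 * B * q ^ S m.
Proof.
  intros HL. apply (series_conv_dist_le a); auto.
  exists (S m). intros M HM. replace M with (S m + (M - S m))%nat by lia.
  eapply Rle_trans; [apply power_series_partial_tail|].
  assert (0 <= q) by (unfold q; apply Rdiv_le_0_compat; [apply Cmod_ge_0|lra]).
  pose proof B_nonneg. pose proof (pow_le q (S m + (M - S m)) H). nra.
Qed.

End PowerSeriesRemainder.

Lemma power_series_coeff_bound (c : nat -> C) (F : C -> C) (r : R) : r > 0 ->
  (forall w, Cmod w < r -> series_conv (fun k => c k * w ^ k)%C (F w)) ->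
  exists B, 0 <= B /\ forall k, Cmod (c k) * (r / 2) ^ k <= B.
Proof.
  intros Hr H.
  destruct (series_conv_terms_bounded _ _ (H (CR (r / 2)) ltac:(rewrite Cmod_R, Rabs_pos_eq; lra)))
    as [B HB].
  exists B. split.
  - pose proof (HB 0%nat). pose proof (Cmod_ge_0 (c 0%nat * CR (r / 2) ^ 0)%C). lra.
  - intros k. specialize (HB k). rewrite Cmod_mult, Cmod_pow, Cmod_R, Rabs_pos_eq in HB; lra.
Qed.

(** * Local expansions and continuity *)

Definition has_local_series (f : C -> C) (z0 : C) (c : nat -> C) : Prop :=
  exists r, r > 0 /\
    forall w, Cmod w < r -> series_conv (fun k => (c k * w ^ k)%C) (f (z0 + w)%C).

(* Some local expansion at z0, chosen by [epsilon] (the zero sequence if there is none). *)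
Definition local_series (f : C -> C) (z0 : C) : nat -> C :=
  epsilon (inhabits (fun _ : nat => CR 0)) (has_local_series f z0).

Lemma local_series_spec (f : C -> C) z0 : analytic_on_disk f -> Cmod z0 < 1 ->
  has_local_series f z0 (local_series f z0).
Proof.
  intros Han Hz. unfold local_series. apply epsilon_spec.
  destruct (Han z0 Hz) as [r [Hr [c Hc]]]. exists c, (Rmin r (1 - Cmod z0)). split.
  { apply Rmin_pos; lra. }
  intros w Hw. pose proof (Rmin_l r (1 - Cmod z0)). pose proof (Rmin_r r (1 - Cmod z0)).
  pose proof (Cmod_triangle z0 w).
  specialize (Hc (z0 + w)%C). coquelicot_ops.
  replace (z0 + w - z0)%C with w in Hc by Cring.
  replace (fun k => (c k * w ^ k)%C) with (fun k => Cmul (c k) (Defs.Cpow w k)).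
  - apply Hc; lra.
  - apply functional_extensionality. intros k. rewrite Defs_Cpow_eq_pow. reflexivity.
Qed.

Lemma local_series_remainder (f : C -> C) z0 : analytic_on_disk f -> Cmod z0 < 1 ->
  exists s B, 0 < s <= 1 - Cmod z0 /\ 0 <= B /\
    (forall k, Cmod (local_series f z0 k) * s ^ k <= B) /\
    forall m w, Cmod w <= s / 2 ->
      Cmod (f (z0 + w)%C - Csum (S m) (fun k => local_series f z0 k * w ^ k)%C)
        <= 2 * B * (Cmod w / s) ^ S m.
Proof.
  intros Han Hz. destruct (local_series_spec f z0 Han Hz) as [r [Hr Hc]].
  set (r' := Rmin r (1 - Cmod z0)).
  assert (Hr' : r' > 0) by (apply Rmin_pos; lra).
  assert (Hconv : forall w, Cmod w < r' ->
            series_conv (fun k => local_series f z0 k * w ^ k)%C (f (z0 + w)%C)).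
  { intros w Hw. apply Hc. pose proof (Rmin_l r (1 - Cmod z0)). fold r' in H. lra. }
  destruct (power_series_coeff_bound _ _ r' Hr' Hconv) as [B [HB0 HB]].
  exists (r' / 2), B. pose proof (Rmin_r r (1 - Cmod z0)). fold r' in H.
  repeat split; auto; try lra.
  intros m w Hw. apply power_series_remainder; auto; try lra. apply Hconv. lra.
Qed.

Lemma local_series_0 (f : C -> C) z0 : analytic_on_disk f -> Cmod z0 < 1 ->
  local_series f z0 0%nat = f z0.
Proof.
  intros Han Hz. destruct (local_series_remainder f z0 Han Hz) as [s [B [Hs [_ [_ H]]]]].
  specialize (H 0%nat (CR 0) ltac:(rewrite Cmod_0; lra)).
  rewrite Cmod_0 in H. replace (0 / s) with 0 in H by (field; lra).
  rewrite pow_i, Rmult_0_r in H by lia.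
  assert (E : (local_series f z0 0%nat - f z0)%C = CR 0).
  { apply Cmod_eq_0. apply Rle_antisym; [|apply Cmod_ge_0].
    replace (local_series f z0 0%nat - f z0)%C
      with (- (f (z0 + CR 0)%C - Csum 1 (fun k => local_series f z0 k * CR 0 ^ k)))%C.
    - rewrite Cmod_opp. exact H.
    - replace (z0 + CR 0)%C with z0 by Cring. simpl. coquelicot_ops. Cring. }
  replace (local_series f z0 0%nat) with ((local_series f z0 0%nat - f z0) + f z0)%C by Cring.
  rewrite E. Cring.
Qed.

Definition Ccontinuous_at (u : C -> C) (z0 : C) : Prop :=
  forall eps, eps > 0 -> exists d, d > 0 /\
    forall z, Cmod (z - z0) < d -> Cmod (u z - u z0) < eps.

Lemma analytic_continuous (f : C -> C) z0 : analytic_on_disk f -> Cmod z0 < 1 ->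
  Ccontinuous_at f z0.
Proof.
  intros Han Hz eps Heps.
  destruct (local_series_remainder f z0 Han Hz) as [s [B [Hs [HB [_ H]]]]].
  set (d := Rmin (s / 2) (eps * s / (2 * B + 1))).
  exists d. split; [apply Rmin_pos; [lra | apply Rdiv_lt_0_compat; nra]|].
  intros z Hzz. assert (Hd1 : d <= s / 2) by apply Rmin_l.
  assert (Hd2 : d <= eps * s / (2 * B + 1)) by apply Rmin_r.
  specialize (H 0%nat (z - z0)%C ltac:(lra)).
  rewrite pow_1 in H. simpl Csum in H. coquelicot_ops.
  rewrite (local_series_0 f z0 Han Hz) in H.
  replace (z0 + (z - z0))%C with z in H by Cring.
  change ((z - z0) ^ 0)%C with (CR 1) in H.
  replace (f z - (CR 0 + f z0 * CR 1))%C with (f z - f z0)%C in H by Cring.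
  assert (Hq : Cmod (z - z0) / s <= eps / (2 * B + 1)).
  { apply (Rmult_le_reg_r s); [lra|]. replace (Cmod (z - z0) / s * s) with (Cmod (z - z0)) by (field; lra).
    replace (eps / (2 * B + 1) * s) with (eps * s / (2 * B + 1)) by (field; lra). lra. }
  assert (2 * B * (eps / (2 * B + 1)) < eps).
  { replace (2 * B * (eps / (2 * B + 1))) with (eps - eps / (2 * B + 1)) by (field; lra).
    assert (0 < eps / (2 * B + 1)) by (apply Rdiv_lt_0_compat; lra). lra. }
  assert (2 * B * (Cmod (z - z0) / s) <= 2 * B * (eps / (2 * B + 1))) by (apply Rmult_le_compat_l; lra).
  lra.
Qed.

Lemma Ccontinuous_const (a : C) z0 : Ccontinuous_at (fun _ => a) z0.
Proof.
  intros eps Heps. exists 1. split; [lra|]. intros.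
  replace (a - a)%C with (CR 0) by Cring. rewrite Cmod_0. lra.
Qed.

Lemma Ccontinuous_id z0 : Ccontinuous_at (fun z => z) z0.
Proof. intros eps Heps. exists eps. split; auto. Qed.

Lemma Ccontinuous_add u v z0 : Ccontinuous_at u z0 -> Ccontinuous_at v z0 ->
  Ccontinuous_at (fun z => u z + v z)%C z0.
Proof.
  intros Hu Hv eps Heps.
  destruct (Hu (eps / 2) ltac:(lra)) as [d1 [Hd1 Hd1']].
  destruct (Hv (eps / 2) ltac:(lra)) as [d2 [Hd2 Hd2']].
  exists (Rmin d1 d2). split; [apply Rmin_pos; lra|]. intros z Hz.
  pose proof (Rmin_l d1 d2). pose proof (Rmin_r d1 d2).
  specialize (Hd1' z ltac:(lra)). specialize (Hd2' z ltac:(lra)).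
  replace (u z + v z - (u z0 + v z0))%C with ((u z - u z0) + (v z - v z0))%C by Cring.
  eapply Rle_lt_trans; [apply Cmod_triangle | lra].
Qed.

Lemma Ccontinuous_mul u v z0 : Ccontinuous_at u z0 -> Ccontinuous_at v z0 ->
  Ccontinuous_at (fun z => u z * v z)%C z0.
Proof.
  intros Hu Hv eps Heps.
  set (a := Cmod (u z0) + 1). set (b := Cmod (v z0) + 1).
  assert (Ha : a > 0) by (unfold a; pose proof (Cmod_ge_0 (u z0)); lra).
  assert (Hb : b > 0) by (unfold b; pose proof (Cmod_ge_0 (v z0)); lra).
  destruct (Hu (Rmin 1 (eps / (2 * b))) ltac:(apply Rmin_pos; [lra | apply Rdiv_lt_0_compat; lra]))
    as [d1 [Hd1 Hd1']].
  destruct (Hv (Rmin 1 (eps / (2 * a))) ltac:(apply Rmin_pos; [lra | apply Rdiv_lt_0_compat; lra]))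
    as [d2 [Hd2 Hd2']].
  exists (Rmin d1 d2). split; [apply Rmin_pos; lra|]. intros z Hz.
  pose proof (Rmin_l d1 d2). pose proof (Rmin_r d1 d2).
  specialize (Hd1' z ltac:(lra)). specialize (Hd2' z ltac:(lra)).
  pose proof (Rmin_l 1 (eps / (2 * b))). pose proof (Rmin_r 1 (eps / (2 * b))).
  pose proof (Rmin_r 1 (eps / (2 * a))).
  replace (u z * v z - u z0 * v z0)%C with ((u z - u z0) * v z + u z0 * (v z - v z0))%C by Cring.
  eapply Rle_lt_trans; [apply Cmod_triangle|]. rewrite !Cmod_mult.
  assert (Hvz : Cmod (v z) <= b).
  { unfold b. pose proof (Cmod_triangle (v z - v z0) (v z0)) as T.
    replace (v z - v z0 + v z0)%C with (v z) in T by Cring.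
    pose proof (Rmin_l 1 (eps / (2 * a))). lra. }
  assert (T1 : Cmod (u z - u z0) * Cmod (v z) < eps / 2).
  { apply Rle_lt_trans with (Cmod (u z - u z0) * b).
    - apply Rmult_le_compat_l; [apply Cmod_ge_0 | lra].
    - apply Rlt_le_trans with (eps / (2 * b) * b); [apply Rmult_lt_compat_r; lra | right; field; lra]. }
  assert (T2 : Cmod (u z0) * Cmod (v z - v z0) <= eps / 2).
  { apply Rle_trans with (a * (eps / (2 * a))); [|right; field; lra].
    apply Rmult_le_compat; try apply Cmod_ge_0; unfold a in *; lra. }
  lra.
Qed.

Lemma Ccontinuous_inv v z0 : Ccontinuous_at v z0 -> v z0 <> CR 0 ->
  Ccontinuous_at (fun z => / v z)%C z0.
Proof.
  intros Hv Hv0 eps Heps.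
  set (m := Cmod (v z0)). assert (Hm : m > 0) by (apply Cmod_gt_0; auto).
  assert (He : Rmin (m / 2) (eps * m * m / 2) > 0).
  { apply Rmin_pos; [lra|]. apply Rdiv_lt_0_compat; [|lra]. repeat apply Rmult_lt_0_compat; lra. }
  destruct (Hv _ He) as [d [Hd Hd']].
  exists d. split; auto. intros z Hz. specialize (Hd' z Hz).
  pose proof (Rmin_l (m / 2) (eps * m * m / 2)). pose proof (Rmin_r (m / 2) (eps * m * m / 2)).
  assert (Hvz : Cmod (v z) >= m / 2).
  { pose proof (Cmod_triangle (v z0 - v z) (v z)) as T.
    replace (v z0 - v z + v z)%C with (v z0) in T by Cring. rewrite Cmod_sub_sym in T. fold m in T. lra. }
  assert (Hvz0 : v z <> CR 0) by (intros E; rewrite E, Cmod_0 in Hvz; lra).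
  replace (/ v z - / v z0)%C with ((v z0 - v z) / (v z * v z0))%C by (Cfield; auto).
  rewrite Cmod_div by (apply Cmult_neq_0; auto). rewrite Cmod_mult, Cmod_sub_sym. fold m.
  apply (Rmult_lt_reg_r (Cmod (v z) * m)); [apply Rmult_lt_0_compat; lra|].
  unfold Rdiv. rewrite Rmult_assoc, Rinv_l, Rmult_1_r by (apply Rgt_not_eq, Rmult_lt_0_compat; lra).
  assert (eps * m * (m / 2) <= eps * m * Cmod (v z)) by (apply Rmult_le_compat_l; [nra | lra]).
  nra.
Qed.

Lemma Ccontinuous_local u v z0 d : d > 0 -> (forall z, Cmod (z - z0) < d -> u z = v z) ->
  Ccontinuous_at v z0 -> Ccontinuous_at u z0.
Proof.
  intros Hd Heq Hv eps Heps. destruct (Hv eps Heps) as [d1 [Hd1 Hd1']].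
  exists (Rmin d d1). split; [apply Rmin_pos; lra|]. intros z Hz.
  pose proof (Rmin_l d d1). pose proof (Rmin_r d d1).
  rewrite (Heq z) by lra.
  rewrite (Heq z0) by (replace (z0 - z0)%C with (CR 0) by Cring; rewrite Cmod_0; lra).
  apply Hd1'. lra.
Qed.

(** * A leading-order argument *)

Lemma cis_pow t k : (((cos t, sin t) : C) ^ k)%C = ((cos (INR k * t), sin (INR k * t)) : C).
Proof.
  induction k as [|k IH].
  - simpl. rewrite Rmult_0_l, cos_0, sin_0. reflexivity.
  - rewrite Cpow_S, IH, S_INR. unfold Cmult; simpl.
    replace ((INR k + 1) * t) with (t + INR k * t) by ring.
    rewrite cos_plus, sin_plus. f_equal; ring.
Qed.

Lemma Cmod_cis t : Cmod ((cos t, sin t) : C) = 1.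
Proof.
  unfold Cmod; simpl. pose proof (sin2_cos2 t). unfold Rsqr in H.
  replace (cos t * (cos t * 1) + sin t * (sin t * 1)) with 1 by lra. apply sqrt_1.
Qed.

(* z = cis (k pi / 2n) gives z^n = i^k, and Re (a i^k) > 0 for some k < 4. *)
Lemma exists_unit_direction (a : C) (n : nat) : a <> CR 0 -> (1 <= n)%nat ->
  exists z : C, Cmod z = 1 /\ Re (a * z ^ n) > 0.
Proof.
  intros Ha Hn. set (t := PI / (2 * INR n)).
  assert (HnR : INR n > 0) by (apply lt_0_INR; lia).
  assert (Hk : forall k : nat, exists z : C, Cmod z = 1 /\
             (z ^ n)%C = ((cos (INR k * (PI / 2)), sin (INR k * (PI / 2))) : C)).
  { intros k. exists (cos (INR k * t), sin (INR k * t)). split; [apply Cmod_cis|].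
    rewrite cis_pow. replace (INR n * (INR k * t)) with (INR k * (PI / 2)); [reflexivity|].
    unfold t. field. lra. }
  destruct a as [a1 a2].
  assert (Hcase : a1 > 0 \/ a2 < 0 \/ a1 < 0 \/ a2 > 0).
  { destruct (Rtotal_order a1 0) as [H1|[H1|H1]]; destruct (Rtotal_order a2 0) as [H2|[H2|H2]];
      subst; auto. exfalso. apply Ha. reflexivity. }
  destruct Hcase as [H|[H|[H|H]]];
    [ destruct (Hk 0%nat) as [z [Hz Hzn]]
    | destruct (Hk 1%nat) as [z [Hz Hzn]]
    | destruct (Hk 2%nat) as [z [Hz Hzn]]
    | destruct (Hk 3%nat) as [z [Hz Hzn]] ];
    exists z; split; auto; rewrite Hzn; simpl INR.
  - rewrite Rmult_0_l, cos_0, sin_0. unfold Cmult; simpl. lra.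
  - rewrite Rmult_1_l, cos_PI2, sin_PI2. unfold Cmult; simpl. lra.
  - replace ((1 + 1) * (PI / 2)) with PI by field. rewrite cos_PI, sin_PI. unfold Cmult; simpl. lra.
  - replace ((1 + 1 + 1) * (PI / 2)) with (3 * (PI / 2)) by field.
    rewrite cos_3PI2, sin_3PI2. unfold Cmult; simpl. lra.
Qed.

Lemma pairing_on_ray (z h k E : C) (t : R) (e n : nat) : Cmod z = 1 ->
  (Cconj ((CR t * z) ^ e * h) * (k * (CR t * z) ^ (e + n) + E))%C
  = (CR (t ^ e * t ^ e * t ^ n) * (Cconj h * k * z ^ n) + Cconj ((CR t * z) ^ e * h) * E)%C.
Proof.
  intros Hz.
  assert (Hzz : (Cconj z * z)%C = CR 1).
  { rewrite Cmult_comm, <- Cmod2_conj, Hz. apply injective_projections; simpl; ring. }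
  assert (Hze : (Cconj z ^ e * z ^ e)%C = CR 1) by (rewrite <- Cpow_mult_l, Hzz; apply Cpow_1_l).
  rewrite !Cmult_conj, !Cpow_conj, !Cmult_conj, !Cpow_mult_l, !Cpow_add_r.
  replace (Cconj (CR t)) with (CR t) by (apply injective_projections; simpl; ring).
  rewrite !RtoC_mult, !RtoC_pow.
  transitivity ((Cconj h * CR t ^ e * CR t ^ e * CR t ^ n * k * z ^ n) * (Cconj z ^ e * z ^ e)
                + (CR t ^ e * Cconj z ^ e * Cconj h) * E)%C; [Cring|].
  rewrite Hze. Cring.
Qed.

Lemma Re_conj_mul_perturb (h h0 u : C) : Re (Cconj h * u) >= Re (Cconj h0 * u) - Cmod (h - h0) * Cmod u.
Proof.
  replace (Cconj h * u)%C with (Cconj h0 * u + Cconj (h - h0) * u)%C by (rewrite Cminus_conj; ring).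
  rewrite re_plus. pose proof (Re_ge_neg_Cmod (Cconj (h - h0) * u)).
  rewrite Cmod_mult, Cmod_conj in H. lra.
Qed.

Lemma Re_pairing_on_ray_ge (z h k E : C) (t d M : R) (e n : nat) :
  Cmod z = 1 -> 0 < t -> Re (Cconj h * k * z ^ n) >= d -> Cmod h <= M -> Cmod E <= M * t ^ S (e + n) ->
  Re (Cconj ((CR t * z) ^ e * h) * (k * (CR t * z) ^ (e + n) + E))
    >= t ^ e * t ^ e * t ^ n * (d - t * M ^ 2).
Proof.
  intros Hz Ht Hlead Hh HE. rewrite pairing_on_ray, re_plus, re_scal_l by auto.
  pose proof (Re_ge_neg_Cmod (Cconj ((CR t * z) ^ e * h) * E)) as Hrest.
  rewrite !Cmod_mult, Cmod_conj, Cmod_mult, Cmod_pow, Cmod_mult, Hz, Cmod_R, Rabs_pos_eq, Rmult_1_r in Hrest by lra.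
  change (t ^ S (e + n)) with (t * t ^ (e + n)) in HE. rewrite pow_add in HE.
  pose proof (pow_le t e ltac:(lra)). pose proof (pow_le t n ltac:(lra)).
  pose proof (Cmod_ge_0 h). pose proof (Cmod_ge_0 E).
  assert (Cmod E <= M * (t * (t ^ e * t ^ n))) by lra.
  assert (t ^ e * Cmod h * Cmod E <= t ^ e * M * (M * (t * (t ^ e * t ^ n)))).
  { apply Rmult_le_compat; [apply Rmult_le_pos; lra | lra | apply Rmult_le_compat_l; lra | lra]. }
  assert (t ^ e * t ^ e * t ^ n * Re (Cconj h * k * z ^ n) >= t ^ e * t ^ e * t ^ n * d).
  { apply Rmult_ge_compat_l; [|lra]. apply Rle_ge. repeat apply Rmult_le_pos; lra. }
  nra.
Qed.

(* Near 0 the pairing is conj (H 0) k |w|^(2e) w^(m-e) + O(|w|^(e+m+1)); along a ray t z on which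
   this leading term is positive, it dominates. *)
Lemma higher_order_pairing_turns_positive (H E : C -> C) (k : C) (e m : nat) (K0 r0 : R) :
  H (CR 0) <> CR 0 -> k <> CR 0 -> (e < m)%nat -> r0 > 0 ->
  (forall w, Cmod w < r0 -> Cmod (E w) <= K0 * Cmod w ^ S m) ->
  Ccontinuous_at H (CR 0) ->
  exists w, Cmod w < r0 /\ Re (Cconj (w ^ e * H w) * (k * w ^ m + E w)) > 0.
Proof.
  intros HH0 Hk Hem Hr0 HE HH.
  set (H0 := H (CR 0)) in *.
  set (n := (m - e)%nat). assert (Hm : m = (e + n)%nat) by (unfold n; lia).
  destruct (exists_unit_direction (Cconj H0 * k) n) as [z [Hz Hd]]; [|unfold n; lia|].
  { apply Cmult_neq_0; auto. intros E0. apply HH0. rewrite <- (Cconj_conj H0), E0.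
    apply injective_projections; simpl; ring. }
  set (d := Re (Cconj H0 * k * z ^ n)) in *.
  set (eta := d / (2 * (Cmod k + 1))).
  assert (Heta : eta > 0) by (apply Rdiv_lt_0_compat; pose proof (Cmod_ge_0 k); lra).
  assert (Hetak : eta * Cmod k <= d / 2).
  { unfold eta. apply (Rmult_le_reg_r (2 * (Cmod k + 1))); [pose proof (Cmod_ge_0 k); lra|].
    field_simplify; pose proof (Cmod_ge_0 k); nra. }
  destruct (HH eta Heta) as [del [Hdel Hdel']]. fold H0 in Hdel'.
  set (M := Cmod H0 + eta + Rabs K0).
  assert (HM : 0 <= M) by (unfold M; pose proof (Cmod_ge_0 H0); pose proof (Rabs_pos K0); lra).
  set (t := Rmin (Rmin (r0 / 2) (del / 2)) (d / (4 * (M ^ 2 + 1)))).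
  assert (Ht : 0 < t /\ t < r0 /\ t < del /\ t * M ^ 2 < d / 2).
  { assert (t <= Rmin (r0 / 2) (del / 2)) by apply Rmin_l. assert (Htd : t <= d / (4 * (M ^ 2 + 1))) by apply Rmin_r.
    pose proof (Rmin_l (r0 / 2) (del / 2)). pose proof (Rmin_r (r0 / 2) (del / 2)).
    assert (0 < t) by (unfold t; repeat apply Rmin_pos; try lra; apply Rdiv_lt_0_compat; nra).
    apply (Rmult_le_compat_r (M ^ 2 + 1)) in Htd; [|nra].
    replace (d / (4 * (M ^ 2 + 1)) * (M ^ 2 + 1)) with (d / 4) in Htd by (field; nra). nra. }
  exists (CR t * z)%C.
  assert (Hw : Cmod (CR t * z) = t) by (rewrite Cmod_mult, Hz, Cmod_R, Rabs_pos_eq; lra).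
  split; [lra|]. rewrite Hm.
  specialize (Hdel' (CR t * z)%C ltac:(replace (CR t * z - CR 0)%C with (CR t * z)%C by Cring; lra)).
  assert (Hpos : 0 < t ^ e * t ^ e * t ^ n * (d / 2 - t * M ^ 2)).
  { apply Rmult_lt_0_compat; [repeat apply Rmult_lt_0_compat; apply pow_lt|]; lra. }
  eapply Rlt_le_trans; [exact Hpos|]. apply Rge_le, Re_pairing_on_ray_ge; try lra; auto.
  - pose proof (Re_conj_mul_perturb (H (CR t * z)%C) H0 (k * z ^ n)).
    rewrite Cmod_mult, Cmod_pow, Hz, pow1, Rmult_1_r, !Cmult_assoc in H1. fold d in H1.
    assert (Cmod (H (CR t * z)%C - H0) * Cmod k <= eta * Cmod k)
      by (apply Rmult_le_compat_r; [apply Cmod_ge_0 | lra]).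
    lra.
  - pose proof (Cmod_triangle (H (CR t * z)%C - H0) H0) as T.
    replace (H (CR t * z)%C - H0 + H0)%C with (H (CR t * z)%C) in T by Cring.
    unfold M. pose proof (Rabs_pos K0). lra.
  - specialize (HE (CR t * z)%C ltac:(lra)). rewrite Hw, Hm in HE.
    pose proof (pow_le t (S (e + n)) ltac:(lra)). pose proof (Rle_abs K0).
    eapply Rle_trans; [exact HE|]. apply Rmult_le_compat_r; [lra|]. unfold M. pose proof (Cmod_ge_0 H0). lra.
Qed.

(** * The Schwarz quotient of a function of class H *)

Section ClassH.

Variable f : C -> C.
Hypothesis Hf : classH f.

Lemma classH_analytic : analytic_on_disk f.
Proof. apply Hf. Qed.

Lemma classH_at_0 : f (CR 0) = CR 1.
Proof. apply Hf. Qed.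

Lemma classH_Cmod_add1_ge_1 z : Cmod z < 1 -> Cmod (f z + CR 1) >= 1.
Proof.
  intros Hz. pose proof (proj1 (proj2 Hf) z Hz). pose proof (Re_le_Cmod (f z + CR 1)).
  coquelicot_ops.
  rewrite re_plus in H0. simpl in H0. lra.
Qed.

Lemma classH_add1_neq_0 z : Cmod z < 1 -> (f z + CR 1)%C <> CR 0.
Proof.
  intros Hz E. pose proof (classH_Cmod_add1_ge_1 z Hz). rewrite E, Cmod_0 in H. lra.
Qed.

Lemma classH_Cmod_sub1_lt_add1 z : Cmod z < 1 -> Cmod (f z - CR 1) < Cmod (f z + CR 1).
Proof.
  intros Hz. pose proof (proj1 (proj2 Hf) z Hz). coquelicot_ops. destruct (f z) as [x y]. unfold Re in H; simpl in H.
  unfold Cmod. apply sqrt_lt_1_alt. simpl. split; [|lra].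
  pose proof (pow2_ge_0 (x + - (1))). pose proof (pow2_ge_0 (y + - 0)). simpl in *. lra.
Qed.

End ClassH.

(* The quotient (f z - 1) / (z (f z + 1)), i.e. phi(z)/z for the Cayley transform
   phi = (f - 1)/(f + 1), extended at 0 by its limit f'(0)/2. *)
Definition schwarz_quotient (f : C -> C) (z : C) : C :=
  if excluded_middle_informative (z = CR 0) then (local_series f (CR 0) 1%nat / CR 2)%C
  else ((f z - CR 1) / (z * (f z + CR 1)))%C.

Lemma schwarz_quotient_0 (f : C -> C) : schwarz_quotient f (CR 0) = (local_series f (CR 0) 1%nat / CR 2)%C.
Proof. unfold schwarz_quotient. destruct excluded_middle_informative; tauto. Qed.

Lemma schwarz_quotient_neq_0 (f : C -> C) z : z <> CR 0 ->
  schwarz_quotient f z = ((f z - CR 1) / (z * (f z + CR 1)))%C.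
Proof. unfold schwarz_quotient. destruct excluded_middle_informative; tauto. Qed.

Lemma Cmod_schwarz_quotient (f : C -> C) z : classH f -> Cmod z < 1 -> z <> CR 0 ->
  Cmod (schwarz_quotient f z) * (Cmod z * Cmod (f z + CR 1)) = Cmod (f z - CR 1).
Proof.
  intros Hf Hz Hz0. pose proof (classH_add1_neq_0 f Hf z Hz) as Hp.
  rewrite schwarz_quotient_neq_0, Cmod_div, Cmod_mult by (auto; apply Cmult_neq_0; auto).
  apply Cmod_gt_0 in Hp. apply Cmod_gt_0 in Hz0. field. lra.
Qed.

Lemma schwarz_quotient_lt_inv (f : C -> C) z : classH f -> Cmod z < 1 -> z <> CR 0 ->
  Cmod (schwarz_quotient f z) < 1 / Cmod z.
Proof.
  intros Hf Hz Hz0. pose proof (Cmod_schwarz_quotient f z Hf Hz Hz0) as E.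
  pose proof (classH_Cmod_sub1_lt_add1 f Hf z Hz). pose proof (classH_Cmod_add1_ge_1 f Hf z Hz).
  apply Cmod_gt_0 in Hz0.
  apply (Rmult_lt_reg_r (Cmod z * Cmod (f z + CR 1))); [nra|].
  rewrite E. field_simplify; lra.
Qed.

(* Second-order Taylor control of f at 0: h(w) - h(0) = (c1 w (1 - f w) + 2 E) / (2 w (f w + 1)),
   with E = f w - 1 - c1 w = O(w^2). *)
Lemma schwarz_quotient_near_0 (f : C -> C) : classH f ->
  exists s B, 0 < s <= 1 /\ 0 <= B /\ forall w, Cmod w <= s / 2 ->
    Cmod (schwarz_quotient f w - schwarz_quotient f (CR 0))
      <= Cmod (local_series f (CR 0) 1%nat) / 2 * Cmod (f w - CR 1) + 2 * B / (s * s) * Cmod w.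
Proof.
  intros Hf. pose proof (classH_analytic f Hf) as Han.
  destruct (local_series_remainder f (CR 0) Han ltac:(rewrite Cmod_0; lra)) as [s [B [Hs [HB [_ HT]]]]].
  rewrite Cmod_0 in Hs. exists s, B. repeat split; try lra.
  intros w Hw. set (c := local_series f (CR 0)) in *.
  assert (Hc0 : c 0%nat = CR 1) by (unfold c; rewrite local_series_0, (classH_at_0 f Hf); auto; rewrite Cmod_0; lra).
  destruct (classic (w = CR 0)) as [->|Hw0].
  { replace (schwarz_quotient f (CR 0) - schwarz_quotient f (CR 0))%C with (CR 0) by Cring.
    rewrite Cmod_0, (classH_at_0 f Hf). replace (CR 1 - CR 1)%C with (CR 0) by Cring.
    rewrite Cmod_0. lra. }
  assert (Hw1 : Cmod w < 1) by lra.
  specialize (HT 1%nat w Hw). replace (CR 0 + w)%C with w in HT by Cring.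
  rewrite !Csum_S in HT. change (Csum 0 _) with (CR 0) in HT. rewrite Hc0 in HT.
  set (E := (f w - CR 1 - c 1%nat * w)%C).
  replace (f w - (CR 0 + CR 1 * w ^ 0 + c 1%nat * w ^ 1))%C with E in HT
    by (unfold E; rewrite Cpow_1_r; change (w ^ 0)%C with (CR 1); Cring).
  pose proof (classH_add1_neq_0 f Hf w Hw1) as Hfp. pose proof (classH_Cmod_add1_ge_1 f Hf w Hw1) as Hfm.
  assert (Hwn : Cmod w > 0) by (apply Cmod_gt_0; auto).
  rewrite schwarz_quotient_neq_0, schwarz_quotient_0 by auto. fold c.
  replace ((f w - CR 1) / (w * (f w + CR 1)) - c 1%nat / CR 2)%C
    with ((c 1%nat * w * (CR 1 - f w) + CR 2 * E) / (CR 2 * w * (f w + CR 1)))%C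
    by (unfold E; Cfield; split; auto; intros H2; apply (f_equal fst) in H2; simpl in H2; lra).
  rewrite Cmod_div by (repeat apply Cmult_neq_0; auto; intros H2; apply (f_equal fst) in H2; simpl in H2; lra).
  rewrite !Cmod_mult, Cmod_R, Rabs_pos_eq by lra.
  pose proof (Cmod_triangle (c 1%nat * w * (CR 1 - f w))%C (CR 2 * E)%C) as T.
  rewrite !Cmod_mult, Cmod_R, Rabs_pos_eq, (Cmod_sub_sym (CR 1)) in T by lra.
  assert (HE : Cmod E <= 2 * B / (s * s) * (Cmod w * Cmod w)).
  { eapply Rle_trans; [exact HT|]. right. simpl. field. lra. }
  apply Rle_trans with ((Cmod (c 1%nat) * Cmod w * Cmod (f w - CR 1) + 2 * Cmod E) / (2 * Cmod w)).
  - unfold Rdiv. apply Rmult_le_compat; try lra.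
    + apply Cmod_ge_0.
    + apply Rlt_le, Rinv_0_lt_compat. nra.
    + apply Rinv_le_contravar; nra.
  - replace ((Cmod (c 1%nat) * Cmod w * Cmod (f w - CR 1) + 2 * Cmod E) / (2 * Cmod w))
      with (Cmod (c 1%nat) / 2 * Cmod (f w - CR 1) + Cmod E / Cmod w) by (field; lra).
    apply Rplus_le_compat_l. apply (Rmult_le_reg_r (Cmod w)); [lra|].
    replace (Cmod E / Cmod w * Cmod w) with (Cmod E) by (field; lra). nra.
Qed.

Lemma schwarz_quotient_continuous_at_0 (f : C -> C) : classH f -> Ccontinuous_at (schwarz_quotient f) (CR 0).
Proof.
  intros Hf eps Heps.
  destruct (schwarz_quotient_near_0 f Hf) as [s [B [Hs [HB Hnear]]]].
  set (k1 := Cmod (local_series f (CR 0) 1%nat)). fold k1 in Hnear.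
  assert (Hk1 : 0 <= k1) by apply Cmod_ge_0.
  destruct (analytic_continuous f (CR 0) (classH_analytic f Hf) ltac:(rewrite Cmod_0; lra)
              (eps / (k1 + 1)) ltac:(apply Rdiv_lt_0_compat; lra)) as [d1 [Hd1 Hd1']].
  rewrite (classH_at_0 f Hf) in Hd1'.
  set (K := 2 * B / (s * s)). assert (HK : 0 <= K) by (unfold K; apply Rdiv_le_0_compat; nra).
  exists (Rmin (Rmin (s / 2) d1) (eps / (2 * (K + 1)))).
  split; [repeat apply Rmin_pos; try lra; apply Rdiv_lt_0_compat; lra|].
  intros w Hw. replace (w - CR 0)%C with w in Hw by Cring.
  pose proof (Rmin_l (Rmin (s / 2) d1) (eps / (2 * (K + 1)))).
  pose proof (Rmin_r (Rmin (s / 2) d1) (eps / (2 * (K + 1)))).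
  pose proof (Rmin_l (s / 2) d1). pose proof (Rmin_r (s / 2) d1).
  specialize (Hnear w ltac:(lra)). fold K in Hnear.
  specialize (Hd1' w ltac:(replace (w - CR 0)%C with w by Cring; lra)).
  assert (T1 : k1 / 2 * Cmod (f w - CR 1) < eps / 2).
  { apply Rle_lt_trans with (k1 / 2 * (eps / (k1 + 1))); [apply Rmult_le_compat_l; lra|].
    apply (Rmult_lt_reg_r (2 * (k1 + 1))); [lra|]. field_simplify; nra. }
  assert (T2 : K * Cmod w < eps / 2).
  { apply Rle_lt_trans with (K * (eps / (2 * (K + 1)))); [apply Rmult_le_compat_l; lra|].
    apply (Rmult_lt_reg_r (2 * (K + 1))); [lra|]. field_simplify; nra. }
  lra.
Qed.

Lemma schwarz_quotient_continuous (f : C -> C) z0 : classH f -> Cmod z0 < 1 ->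
  Ccontinuous_at (schwarz_quotient f) z0.
Proof.
  intros Hf Hz0. pose proof (classH_analytic f Hf) as Han.
  destruct (classic (z0 = CR 0)) as [->|E0]; [apply schwarz_quotient_continuous_at_0; auto|].
  apply (Ccontinuous_local _ (fun z => (f z - CR 1) * / (z * (f z + CR 1)))%C z0
           (Rmin (Cmod z0) (1 - Cmod z0))).
  - apply Rmin_pos; [apply Cmod_gt_0; auto | lra].
  - intros z Hz. pose proof (Rmin_l (Cmod z0) (1 - Cmod z0)).
    rewrite schwarz_quotient_neq_0; [reflexivity|]. intros ->.
    rewrite Cmod_sub_sym in Hz. replace (z0 - CR 0)%C with z0 in Hz by Cring. lra.
  - apply Ccontinuous_mul.
    + apply (Ccontinuous_add f (fun _ => - CR 1)%C); [apply analytic_continuous; auto|apply Ccontinuous_const].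
    + apply (Ccontinuous_inv (fun z => z * (f z + CR 1))%C).
      * apply Ccontinuous_mul; [apply Ccontinuous_id|].
        apply (Ccontinuous_add f); [apply analytic_continuous; auto | apply Ccontinuous_const].
      * apply Cmult_neq_0; auto. apply classH_add1_neq_0; auto.
Qed.

(** * Rigidity of the Schwarz quotient at a local maximum of its modulus *)

(* h(z) = g exactly when this vanishes (for z <> 0), and f z - 1 = g z (f z + 1) + defect. *)
Definition level_defect (f : C -> C) (g z : C) : C := ((CR 1 - g * z) * f z - (CR 1 + g * z))%C.

(* Taylor coefficients at zs of the level defect, from those [c] of f. *)
Definition level_defect_coeff (g zs : C) (c : nat -> C) (j : nat) : C :=
  match j with
  | O => ((CR 1 - g * zs) * c 0%nat - (CR 1 + g * zs))%C
  | S O => ((CR 1 - g * zs) * c 1%nat - g * c 0%nat - g)%C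
  | S j' => ((CR 1 - g * zs) * c j - g * c j')%C
  end.

Lemma level_defect_partial_sum g zs c w M :
  ((CR 1 - g * (zs + w)) * Csum (S (S M)) (fun k => c k * w ^ k) - (CR 1 + g * (zs + w)))%C
  = (Csum (S (S M)) (fun j => level_defect_coeff g zs c j * w ^ j) - g * c (S M) * w ^ S (S M))%C.
Proof.
  induction M as [|M IH].
  - rewrite !Csum_S. change (Csum 0 _) with (CR 0). simpl level_defect_coeff. rewrite !Cpow_S.
    change (w ^ 0)%C with (CR 1). Cring.
  - rewrite (Csum_S (S (S M)) (fun k => c k * w ^ k)%C).
    rewrite (Csum_S (S (S M)) (fun j => level_defect_coeff g zs c j * w ^ j)%C).
    transitivity (((CR 1 - g * (zs + w)) * Csum (S (S M)) (fun k => c k * w ^ k) - (CR 1 + g * (zs + w)))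
       + (CR 1 - g * (zs + w)) * (c (S (S M)) * w ^ S (S M)))%C; [Cring|].
    rewrite IH. change (level_defect_coeff g zs c (S (S M)))
      with ((CR 1 - g * zs) * c (S (S M)) - g * c (S M))%C.
    rewrite !Cpow_S. Cring.
Qed.

Lemma level_defect_remainder (f : C -> C) g zs : analytic_on_disk f -> Cmod zs < 1 ->
  exists s B, 0 < s <= 1 - Cmod zs /\ (forall k, Cmod (local_series f zs k) * s ^ k <= B) /\
    forall M w, Cmod w <= Rmin (s / 2) 1 ->
      Cmod (level_defect f g (zs + w)
            - Csum (S (S M)) (fun j => level_defect_coeff g zs (local_series f zs) j * w ^ j)%C)
        <= ((1 + Cmod g * (Cmod zs + 1)) * (2 * B) / s ^ S (S M) + Cmod g * Cmod (local_series f zs (S M)))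
           * Cmod w ^ S (S M).
Proof.
  intros Han Hzs. destruct (local_series_remainder f zs Han Hzs) as [s [B [Hs [HB [HBk HT]]]]].
  exists s, B. split; [lra|]. split; [auto|]. intros M w Hw.
  pose proof (Rmin_l (s / 2) 1). pose proof (Rmin_r (s / 2) 1).
  set (c := local_series f zs) in *. set (S2 := Csum (S (S M)) (fun k => c k * w ^ k)%C).
  specialize (HT (S M) w ltac:(lra)). fold S2 in HT.
  replace (level_defect f g (zs + w) - Csum (S (S M)) (fun j => level_defect_coeff g zs c j * w ^ j))%C
    with ((CR 1 - g * (zs + w)) * (f (zs + w)%C - S2) - g * c (S M) * w ^ S (S M))%C.
  2:{ unfold level_defect. pose proof (level_defect_partial_sum g zs c w M) as P. fold S2 in P.
       replace (Csum (S (S M)) (fun j => level_defect_coeff g zs c j * w ^ j)%C)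
         with (((CR 1 - g * (zs + w)) * S2 - (CR 1 + g * (zs + w))) + g * c (S M) * w ^ S (S M))%C
         by (rewrite P; Cring).
       Cring. }
  eapply Rle_trans; [apply Cmod_sub_le|]. rewrite !Cmod_mult, Cmod_pow.
  assert (HA : Cmod (CR 1 - g * (zs + w)) <= 1 + Cmod g * (Cmod zs + 1)).
  { eapply Rle_trans; [apply Cmod_sub_le|]. rewrite Cmod_R, Rabs_R1, Cmod_mult.
    pose proof (Cmod_triangle zs w). pose proof (Cmod_ge_0 g).
    apply Rplus_le_compat_l. apply Rmult_le_compat_l; lra. }
  replace ((Cmod w / s) ^ S (S M)) with (Cmod w ^ S (S M) / s ^ S (S M)) in HT
    by (unfold Rdiv; rewrite Rpow_mult_distr, pow_inv; reflexivity).
  assert (Hs2 : 0 < s ^ S (S M)) by (apply pow_lt; lra).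
  apply Rle_trans with ((1 + Cmod g * (Cmod zs + 1)) * (2 * B * (Cmod w ^ S (S M) / s ^ S (S M)))
                        + Cmod g * Cmod (c (S M)) * Cmod w ^ S (S M)).
  - apply Rplus_le_compat_r. apply Rmult_le_compat; auto using Cmod_ge_0, Cmod_ge_0.
  - right. field. lra.
Qed.

Lemma remainder_bound_geometric (A B G cM s x : R) (M : nat) :
  0 < s -> 0 <= x <= s / 2 -> x <= 1 -> 0 <= A -> 0 <= G -> 0 <= cM -> cM * s ^ S M <= B ->
  (A * (2 * B) / s ^ S (S M) + G * cM) * x ^ S (S M) <= (2 * A * B + G * B) * (x / s) ^ S M.
Proof.
  intros Hs Hx Hx1 HA HG HcM HB.
  set (q := x / s). assert (Hq : 0 <= q <= 1 / 2).
  { unfold q. split; [apply Rdiv_le_0_compat; lra|]. apply (Rmult_le_reg_r s); [lra|]. field_simplify; lra. }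
  assert (HqM : 0 <= q ^ S M) by (apply pow_le; lra).
  assert (HsM : 0 < s ^ S M) by (apply pow_lt; lra).
  assert (HB0 : 0 <= B) by nra.
  assert (Hxq : x ^ S (S M) = q ^ S M * s ^ S M * (q * s)).
  { replace (q * s) with x by (unfold q; field; lra). rewrite <- Rpow_mult_distr.
    replace (q * s) with x by (unfold q; field; lra). simpl. ring. }
  rewrite Hxq. change (s ^ S (S M)) with (s * s ^ S M). set (sM := s ^ S M) in *.
  replace ((A * (2 * B) / (s * sM) + G * cM) * (q ^ S M * sM * (q * s)))
    with (2 * A * B * q ^ S M * q + G * q ^ S M * (cM * sM) * (q * s)) by (field; lra).
  assert (G * q ^ S M * (cM * sM) * (q * s) <= G * q ^ S M * B * 1).
  { assert (q * s <= 1) by (unfold q; replace (x / s * s) with x by (field; lra); lra).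
    apply Rmult_le_compat; [apply Rmult_le_pos; [apply Rmult_le_pos | apply Rmult_le_pos]; lra
                           | apply Rmult_le_pos; lra | | lra].
    apply Rmult_le_compat_l; [apply Rmult_le_pos|]; lra. }
  assert (2 * A * B * q ^ S M * q <= 2 * A * B * q ^ S M * 1).
  { apply Rmult_le_compat_l; [|lra]. apply Rmult_le_pos; [nra | lra]. }
  lra.
Qed.

Section Rigidity.

Variables (f : C -> C) (zs g : C).
Hypotheses (Hf : classH f) (Hzs : Cmod zs < 1) (Hg : schwarz_quotient f zs = g) (Hg0 : g <> CR 0).
Hypothesis Hmax : exists eps, eps > 0 /\
  forall z, Cmod (z - zs) < eps -> Cmod (schwarz_quotient f z) <= Cmod g.

Let c := local_series f zs.
Let kappa := level_defect_coeff g zs c.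

Lemma schwarz_quotient_eq_of_level_defect z : Cmod z < 1 -> z <> CR 0 ->
  level_defect f g z = CR 0 -> schwarz_quotient f z = g.
Proof.
  intros Hz Hz0 HK. rewrite schwarz_quotient_neq_0 by auto. unfold level_defect in HK.
  pose proof (classH_add1_neq_0 f Hf z Hz).
  replace (f z - CR 1)%C with (g * (z * (f z + CR 1)) + ((CR 1 - g * z) * f z - (CR 1 + g * z)))%C by Cring.
  rewrite HK. Cfield. split; auto.
Qed.

Lemma level_defect_coeff_0 : kappa 0%nat = CR 0.
Proof.
  unfold kappa, c. simpl level_defect_coeff.
  rewrite local_series_0 by (auto; apply classH_analytic; auto).
  destruct (classic (zs = CR 0)) as [->|Hz0].
  - rewrite (classH_at_0 f Hf). Cring.
  - rewrite schwarz_quotient_neq_0 in Hg by auto. pose proof (classH_add1_neq_0 f Hf zs Hzs).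
    assert ((zs * (f zs + CR 1))%C <> CR 0) by (apply Cmult_neq_0; auto).
    rewrite <- Hg. Cfield. auto.
Qed.

Lemma level_defect_coeff_1_at_0 : zs = CR 0 -> kappa 1%nat = CR 0.
Proof.
  intros Hz0. unfold kappa, c. simpl level_defect_coeff. subst zs.
  rewrite local_series_0, (classH_at_0 f Hf) by (first [apply classH_analytic; auto | rewrite Cmod_0; lra]).
  rewrite schwarz_quotient_0 in Hg. rewrite <- Hg. Cfield.
Qed.

(* Near zs the Schwarz quotient is g times z (f z + 1) = w^e H(w), w = z - zs, with H(0) <> 0:
   the factor z vanishes at zs only when zs = 0. *)
Let e := if excluded_middle_informative (zs = CR 0) then 1%nat else 0%nat.
Let H := fun w => (g * (f (zs + w)%C + CR 1)
                   * (if excluded_middle_informative (zs = CR 0) then CR 1 else zs + w))%C.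

Lemma level_defect_factor w : (g * ((zs + w) * (f (zs + w)%C + CR 1)))%C = (w ^ e * H w)%C.
Proof.
  unfold e, H. destruct excluded_middle_informative as [->|Hz0].
  - rewrite Cpow_1_r. Cring.
  - change (w ^ 0)%C with (CR 1). Cring.
Qed.

Lemma level_defect_factor_continuous : Ccontinuous_at H (CR 0) /\ H (CR 0) <> CR 0.
Proof.
  pose proof (classH_analytic f Hf) as Han.
  assert (Hshift : Ccontinuous_at (fun w => f (zs + w)%C) (CR 0)).
  { intros eps Heps. destruct (analytic_continuous f zs Han Hzs eps Heps) as [d [Hd Hd']].
    exists d. split; auto. intros w Hw. replace (zs + CR 0)%C with zs by Cring.
    apply Hd'. replace (zs + w - zs)%C with (w - CR 0)%C by Cring. auto. }
  split.
  - unfold H. apply Ccontinuous_mul; [apply Ccontinuous_mul|].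
    + apply Ccontinuous_const.
    + apply (Ccontinuous_add (fun w => f (zs + w)%C)); [auto | apply Ccontinuous_const].
    + destruct excluded_middle_informative; [apply Ccontinuous_const|].
      apply (Ccontinuous_add (fun _ => zs)); [apply Ccontinuous_const | apply Ccontinuous_id].
  - unfold H. replace (zs + CR 0)%C with zs by Cring.
    repeat apply Cmult_neq_0; auto; [apply classH_add1_neq_0; auto|].
    destruct excluded_middle_informative as [_|Hz0]; auto.
    intros E. apply (f_equal fst) in E. simpl in E. lra.
Qed.

Lemma level_defect_pairing_nonpos : exists r, r > 0 /\ forall w, Cmod w < r ->
  Re (Cconj (w ^ e * H w) * level_defect f g (zs + w)) <= 0.
Proof.
  destruct Hmax as [eps [Heps Hle]].
  exists (Rmin eps (1 - Cmod zs)). split; [apply Rmin_pos; lra|]. intros w Hw.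
  pose proof (Rmin_l eps (1 - Cmod zs)). pose proof (Rmin_r eps (1 - Cmod zs)).
  assert (Hz : Cmod (zs + w) < 1) by (pose proof (Cmod_triangle zs w); lra).
  rewrite <- level_defect_factor. apply Re_conj_nonpos_of_Cmod_le.
  replace (g * ((zs + w) * (f (zs + w)%C + CR 1)) + level_defect f g (zs + w))%C
    with (f (zs + w)%C - CR 1)%C by (unfold level_defect; Cring).
  rewrite !Cmod_mult.
  destruct (classic (zs + w = CR 0)%C) as [Hz0|Hz0].
  - rewrite Hz0, (classH_at_0 f Hf), Cmod_0. replace (CR 1 - CR 1)%C with (CR 0) by Cring.
    rewrite Cmod_0. lra.
  - rewrite <- (Cmod_schwarz_quotient f (zs + w) Hf Hz Hz0).
    specialize (Hle (zs + w)%C ltac:(replace (zs + w - zs)%C with w by Cring; lra)).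
    pose proof (Cmod_ge_0 (zs + w)). pose proof (Cmod_ge_0 (f (zs + w)%C + CR 1)).
    apply Rmult_le_compat_r; [nra | lra].
Qed.

Lemma level_defect_coeffs_vanish j : kappa j = CR 0.
Proof.
  apply NNPP. intros Hj.
  destruct (dec_inh_nat_subset_has_unique_least_element (fun j => kappa j <> CR 0)
              (fun j => classic _) (ex_intro _ j Hj)) as [m [[Hm Hmin] _]].
  assert (Hbelow : forall i, (i < m)%nat -> kappa i = CR 0).
  { intros i Hi. apply NNPP. intros Hi'. specialize (Hmin i Hi'). lia. }
  assert (Hem : (e < m)%nat).
  { assert (m <> 0%nat) by (intros ->; apply Hm, level_defect_coeff_0).
    unfold e. destruct excluded_middle_informative as [Hz0|]; [|lia].
    assert (m <> 1%nat) by (intros ->; apply Hm, level_defect_coeff_1_at_0; auto). lia. }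
  destruct m as [|M]; [lia|].
  destruct (level_defect_remainder f g zs (classH_analytic f Hf) Hzs) as [s [B [Hs [_ HR]]]].
  destruct level_defect_pairing_nonpos as [r [Hr Hpair]].
  destruct level_defect_factor_continuous as [Hcont HH0].
  set (K0 := (1 + Cmod g * (Cmod zs + 1)) * (2 * B) / s ^ S (S M) + Cmod g * Cmod (c (S M))).
  destruct (higher_order_pairing_turns_positive H (fun w => level_defect f g (zs + w) - kappa (S M) * w ^ S M)%C
              (kappa (S M)) e (S M) K0 (Rmin (Rmin (s / 2) 1) r) HH0 Hm Hem
              ltac:(repeat apply Rmin_pos; lra)) as [w [Hw Hpos]]; auto.
  - intros w Hw. pose proof (Rmin_l (Rmin (s / 2) 1) r).
    specialize (HR M w ltac:(lra)).
    rewrite Csum_S, Csum_zero in HR by (intros i Hi; cbv beta;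
        replace (level_defect_coeff g zs (local_series f zs) i) with (CR 0) by (symmetry; apply Hbelow; lia);
        Cring).
    replace (CR 0 + level_defect_coeff g zs (local_series f zs) (S M) * w ^ S M)%C
      with (kappa (S M) * w ^ S M)%C in HR by (unfold kappa, c; Cring).
    exact HR.
  - pose proof (Rmin_r (Rmin (s / 2) 1) r). specialize (Hpair w ltac:(lra)).
    replace (kappa (S M) * w ^ S M + (level_defect f g (zs + w) - kappa (S M) * w ^ S M))%C
      with (level_defect f g (zs + w)) in Hpos by Cring.
    lra.
Qed.

Lemma level_defect_vanishes_near : exists r, r > 0 /\ forall w, Cmod w < r ->
  level_defect f g (zs + w) = CR 0.
Proof.
  destruct (level_defect_remainder f g zs (classH_analytic f Hf) Hzs) as [s [B [Hs [HB HR]]]].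
  fold c in HB, HR. exists (Rmin (s / 2) 1). split; [apply Rmin_pos; lra|]. intros w Hw.
  pose proof (Rmin_l (s / 2) 1). pose proof (Rmin_r (s / 2) 1).
  set (A := 1 + Cmod g * (Cmod zs + 1)).
  assert (HA : 0 <= A) by (unfold A; pose proof (Cmod_ge_0 zs); pose proof (Cmod_ge_0 g); nra).
  apply Cmod_eq_0, Rle_antisym; [|apply Cmod_ge_0].
  apply (le_0_of_le_geometric _ (2 * A * B + Cmod g * B) (Cmod w / s)).
  { split; [apply Rdiv_le_0_compat; [apply Cmod_ge_0 | lra]|].
    apply (Rmult_lt_reg_r s); [lra|]. field_simplify; lra. }
  intros M. specialize (HR M w ltac:(lra)).
  rewrite Csum_zero in HR by (intros i Hi; cbv beta; fold c;
    replace (level_defect_coeff g zs c i) with (CR 0) by (symmetry; apply level_defect_coeffs_vanish); Cring).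
  replace (level_defect f g (zs + w) - CR 0)%C with (level_defect f g (zs + w)) in HR by Cring.
  fold A in HR. eapply Rle_trans; [exact HR|].
  apply remainder_bound_geometric; auto using Cmod_ge_0; pose proof (Cmod_ge_0 w); lra.
Qed.

Lemma schwarz_quotient_locally_constant : exists d, d > 0 /\
  forall z, Cmod (z - zs) < d -> schwarz_quotient f z = g.
Proof.
  destruct level_defect_vanishes_near as [r [Hr HK]].
  set (d := Rmin (Rmin r (1 - Cmod zs)) (if excluded_middle_informative (zs = CR 0) then 1 else Cmod zs)).
  exists d. split.
  { unfold d. repeat apply Rmin_pos; try lra.
    destruct excluded_middle_informative; [lra | apply Cmod_gt_0; auto]. }
  intros z Hz.
  assert (Hd : d <= r /\ d <= 1 - Cmod zs).
  { assert (d <= Rmin r (1 - Cmod zs)) by apply Rmin_l.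
    pose proof (Rmin_l r (1 - Cmod zs)). pose proof (Rmin_r r (1 - Cmod zs)). lra. }
  assert (Hd' : d <= if excluded_middle_informative (zs = CR 0) then 1 else Cmod zs) by apply Rmin_r.
  destruct (classic (z = CR 0)) as [->|Hz0].
  - destruct excluded_middle_informative as [Hzs0|Hzs0]; [subst; auto|].
    rewrite Cmod_sub_sym in Hz. replace (zs - CR 0)%C with zs in Hz by Cring. lra.
  - apply schwarz_quotient_eq_of_level_defect; auto.
    + pose proof (Cmod_triangle (z - zs) zs). replace (z - zs + zs)%C with z in H0 by Cring. lra.
    + replace z with (zs + (z - zs))%C by Cring. apply HK. lra.
Qed.

End Rigidity.

(** * Compactness of closed disks and propagation along segments *)

Definition C_of_Tn (x : Compactness.Tn 2 R) : C := (fst x, fst (snd x)).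
Definition Tn_of_C (z : C) : Compactness.Tn 2 R := (fst z, (snd z, tt)).

Lemma Cmod_le_Rabs_sum (z : C) : Cmod z <= Rabs (fst z) + Rabs (snd z).
Proof.
  destruct z as [x y]. unfold Cmod; cbn [fst snd].
  rewrite <- (sqrt_pow2 (Rabs x + Rabs y)) by (pose proof (Rabs_pos x); pose proof (Rabs_pos y); lra).
  apply sqrt_le_1_alt. rewrite <- (pow2_abs x), <- (pow2_abs y).
  pose proof (Rabs_pos x); pose proof (Rabs_pos y). simpl. nra.
Qed.

(* Cover the square [-rho, rho]^2; centers outside the disk get radii too small to reach it. *)
Lemma closed_disk_finite_cover (rho : R) (del : C -> R) : 0 < rho ->
  (forall z, Cmod z <= rho -> del z > 0) ->
  exists l : list C, (forall t, In t l -> Cmod t <= rho) /\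
    forall z, Cmod z <= rho -> exists t, In t l /\ Cmod (z - t) < del t.
Proof.
  intros Hrho Hdel.
  set (r := fun x : Compactness.Tn 2 R =>
    if Rle_dec (Cmod (C_of_Tn x)) rho then del (C_of_Tn x) / 2 else (Cmod (C_of_Tn x) - rho) / 2).
  assert (Hr : forall x, 0 < r x) by (intros x; unfold r; destruct Rle_dec; [specialize (Hdel _ r0)|]; lra).
  destruct (NNPP _ (Compactness.compactness_list 2 (-rho, (-rho, tt)) (rho, (rho, tt))
                      (fun x => mkposreal (r x) (Hr x)))) as [l Hl].
  exists (filter (fun t => if Rle_dec (Cmod t) rho then true else false) (map C_of_Tn l)). split.
  - intros t Ht. apply filter_In in Ht. destruct Ht as [_ Ht]. destruct Rle_dec; [auto | discriminate].
  - intros z Hz. destruct (Hl (Tn_of_C z)) as [[t1 [t2 []]] [Ht [_ [H1 [H2 _]]]]].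
    { pose proof (Rmax_Cmod z). pose proof (Rmax_l (Rabs (fst z)) (Rabs (snd z))).
      pose proof (Rmax_r (Rabs (fst z)) (Rabs (snd z))).
      unfold Tn_of_C. simpl. unfold Rabs in *. destruct (Rcase_abs (fst z)), (Rcase_abs (snd z)); repeat split; lra. }
    set (u := C_of_Tn (t1, (t2, tt))). simpl in H1, H2.
    assert (Hzu : Cmod (z - u) < 2 * r (t1, (t2, tt))).
    { pose proof (Cmod_le_Rabs_sum (z - u)) as Hs.
      replace (fst (z - u)%C) with (fst z - t1) in Hs by (unfold u, C_of_Tn; simpl; ring).
      replace (snd (z - u)%C) with (snd z - t2) in Hs by (unfold u, C_of_Tn; simpl; ring). lra. }
    unfold r in Hzu. fold u in Hzu. destruct Rle_dec as [Hu|Hu].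
    + exists u. split; [|lra]. apply filter_In. split; [apply in_map; auto|]. destruct Rle_dec; tauto.
    + exfalso. pose proof (Cmod_triangle (u - z) z). replace (u - z + z)%C with u in H by Cring.
      rewrite Cmod_sub_sym in H. lra.
Qed.

Definition list_max (phi : C -> R) (b : R) (l : list C) : R :=
  fold_right (fun t acc => Rmax (phi t) acc) b l.

Lemma list_max_ge (phi : C -> R) b l t : In t l -> phi t <= list_max phi b l.
Proof.
  induction l as [|a l IH]; simpl; intros H; [contradiction|].
  destruct H as [->|H]; [apply Rmax_l|]. eapply Rle_trans; [apply IH; auto | apply Rmax_r].
Qed.

Lemma list_max_lt (phi : C -> R) b l M : b < M -> (forall t, In t l -> phi t < M) -> list_max phi b l < M.
Proof.
  induction l as [|a l IH]; simpl; intros Hb H; auto.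
  apply Rmax_lub_lt; [apply H; auto | apply IH; auto].
Qed.

Section ClosedDiskMax.

Variables (g : C -> R) (rho : R).
Hypothesis Hrho : 0 < rho.
Hypothesis Hg : forall z, Cmod z <= rho -> forall eps, eps > 0 ->
  exists d, d > 0 /\ forall w, Cmod (w - z) < d -> Rabs (g w - g z) < eps.

Let delta (eps : C -> R) (z : C) : R := epsilon (inhabits 1)
  (fun d => d > 0 /\ forall w, Cmod (w - z) < d -> Rabs (g w - g z) < eps z).

Lemma delta_spec eps z : Cmod z <= rho -> eps z > 0 ->
  delta eps z > 0 /\ forall w, Cmod (w - z) < delta eps z -> Rabs (g w - g z) < eps z.
Proof. intros Hz He. unfold delta. apply epsilon_spec. apply Hg; auto. Qed.

Lemma closed_disk_cover_bound (eps : C -> R) : (forall z, Cmod z <= rho -> eps z > 0) ->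
  exists l, (forall t, In t l -> Cmod t <= rho) /\
    forall z, Cmod z <= rho -> exists t, In t l /\ g z < g t + eps t.
Proof.
  intros He. destruct (closed_disk_finite_cover rho (delta eps) Hrho) as [l [Hl Hcov]].
  { intros z Hz. apply delta_spec; auto. }
  exists l. split; auto. intros z Hz. destruct (Hcov z Hz) as [t [Ht Hzt]].
  exists t. split; auto. destruct (delta_spec eps t (Hl t Ht) (He t (Hl t Ht))) as [_ Hd].
  specialize (Hd z Hzt). pose proof (Rle_abs (g z - g t)). lra.
Qed.

Lemma closed_disk_max : exists zs, Cmod zs <= rho /\ forall z, Cmod z <= rho -> g z <= g zs.
Proof.
  set (E := fun y => exists z, Cmod z <= rho /\ y = g z).
  assert (H0 : Cmod (CR 0) <= rho) by (rewrite Cmod_0; lra).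
  destruct (completeness E) as [M [HMub HMl]].
  - destruct (closed_disk_cover_bound (fun _ => 1) ltac:(intros; lra)) as [l [_ Hl]].
    exists (list_max g (g (CR 0)) l + 1). intros y [z [Hz ->]].
    destruct (Hl z Hz) as [t [Ht Hzt]]. pose proof (list_max_ge g (g (CR 0)) l t Ht). lra.
  - exists (g (CR 0)), (CR 0). auto.
  - destruct (classic (exists zs, Cmod zs <= rho /\ g zs = M)) as [[zs [Hzs HzM]]|Hno].
    + exists zs. split; auto. intros z Hz. rewrite HzM. apply HMub. exists z. auto.
    + (* Otherwise balls on which g < (M + g t) / 2 give an upper bound below M. *)
      exfalso.
      assert (Hlt : forall z, Cmod z <= rho -> g z < M).
      { intros z Hz. assert (g z <= M) by (apply HMub; exists z; auto).
        destruct (Req_dec (g z) M); [exfalso; apply Hno; exists z; auto | lra]. }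
      destruct (closed_disk_cover_bound (fun z => (M - g z) / 2)) as [l [Hl Hcov]].
      { intros z Hz. specialize (Hlt z Hz). lra. }
      set (L := list_max (fun t => (M + g t) / 2) ((M + g (CR 0)) / 2) l).
      assert (HL : L < M).
      { apply list_max_lt; [pose proof (Hlt (CR 0) H0); lra|].
        intros t Ht. pose proof (Hlt t (Hl t Ht)). lra. }
      assert (M <= L); [|lra].
      apply HMl. intros y [z [Hz ->]]. destruct (Hcov z Hz) as [t [Ht Hzt]].
      pose proof (list_max_ge (fun t => (M + g t) / 2) ((M + g (CR 0)) / 2) l t Ht). fold L in H. lra.
Qed.

End ClosedDiskMax.

Definition segment (a b : C) (t : R) : C := (a + CR t * (b - a))%C.

Lemma segment_near a b t s d : d > 0 -> Rabs (t - s) <= d / (2 * (Cmod (b - a) + 1)) ->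
  Cmod (segment a b s - segment a b t) < d.
Proof.
  intros Hd Hts. pose proof (Cmod_ge_0 (b - a)).
  unfold segment. replace (a + CR s * (b - a) - (a + CR t * (b - a)))%C with (CR (s - t) * (b - a))%C
    by (rewrite RtoC_minus; Cring).
  rewrite Cmod_mult, Cmod_R, Rabs_minus_sym.
  apply Rle_lt_trans with (d / (2 * (Cmod (b - a) + 1)) * (Cmod (b - a) + 1)).
  - apply Rmult_le_compat; try lra; apply Rabs_pos.
  - replace (d / (2 * (Cmod (b - a) + 1)) * (Cmod (b - a) + 1)) with (d / 2) by (field; lra). lra.
Qed.

Lemma segment_value_at_limit (u : C -> C) (a b gam : C) tau : 0 < tau ->
  Ccontinuous_at u (segment a b tau) -> (forall s, 0 <= s < tau -> u (segment a b s) = gam) ->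
  u (segment a b tau) = gam.
Proof.
  intros Htau Hcont Hbefore. apply NNPP. intros Hn.
  assert (Heta : Cmod (u (segment a b tau) - gam) > 0).
  { apply Cmod_gt_0. intros E. apply Hn.
    replace (u (segment a b tau)) with (u (segment a b tau) - gam + gam)%C by Cring. rewrite E. Cring. }
  destruct (Hcont _ Heta) as [d [Hd Hd']].
  set (r := d / (2 * (Cmod (b - a) + 1))).
  assert (Hr : r > 0) by (apply Rdiv_lt_0_compat; pose proof (Cmod_ge_0 (b - a)); lra).
  set (s := Rmax 0 (tau - r)).
  assert (Hs : 0 <= s < tau /\ Rabs (tau - s) <= r).
  { assert (0 <= s) by apply Rmax_l. assert (tau - r <= s) by apply Rmax_r.
    assert (s < tau) by (apply Rmax_lub_lt; lra). rewrite Rabs_pos_eq; lra. }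
  specialize (Hd' (segment a b s) (segment_near a b tau s d Hd (proj2 Hs))).
  rewrite (Hbefore s (proj1 Hs)), Cmod_sub_sym in Hd'. lra.
Qed.

(* Take the supremum of the initial interval on which u = gam. *)
Lemma segment_value_propagates (u : C -> C) (a b gam : C) :
  (forall t, 0 <= t <= 1 -> Ccontinuous_at u (segment a b t)) ->
  (forall t, 0 <= t < 1 -> u (segment a b t) = gam ->
     exists d, d > 0 /\ forall z, Cmod (z - segment a b t) < d -> u z = gam) ->
  u a = gam -> u b = gam.
Proof.
  intros Hcont Hloc Ha.
  assert (Hsa : segment a b 0 = a) by (unfold segment; Cring).
  assert (Hsb : segment a b 1 = b) by (unfold segment; Cring).
  set (S := fun t => 0 <= t <= 1 /\ forall s, 0 <= s <= t -> u (segment a b s) = gam).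
  assert (HS0 : S 0) by (split; [lra|]; intros s Hs; replace s with 0 by lra; rewrite Hsa; auto).
  destruct (completeness S) as [tau [Hub Hlub]]; [exists 1; intros t [Ht _]; lra | exists 0; auto|].
  assert (Htau : 0 <= tau <= 1) by (split; [apply Hub; auto | apply Hlub; intros t [Ht _]; lra]).
  assert (Hbefore : forall s, 0 <= s < tau -> u (segment a b s) = gam).
  { intros s Hs. apply NNPP. intros Hn. assert (tau <= s); [|lra]. apply Hlub. intros t [Ht Ht'].
    apply Rnot_lt_le. intros Hst. apply Hn, Ht'. lra. }
  assert (Hattau : u (segment a b tau) = gam).
  { destruct (Req_dec tau 0) as [->|Ht0]; [rewrite Hsa; auto|].
    apply segment_value_at_limit; auto; lra. }
  destruct (Req_dec tau 1) as [Ht1|Ht1]; [rewrite <- Hsb, <- Ht1; auto|].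
  exfalso. destruct (Hloc tau ltac:(lra) Hattau) as [d [Hd Hd']].
  set (r := d / (2 * (Cmod (b - a) + 1))).
  assert (Hr : r > 0) by (apply Rdiv_lt_0_compat; pose proof (Cmod_ge_0 (b - a)); lra).
  set (t' := Rmin 1 (tau + r)).
  assert (Ht' : tau < t' /\ t' <= 1 /\ t' - tau <= r).
  { assert (t' <= 1) by apply Rmin_l. assert (t' <= tau + r) by apply Rmin_r.
    assert (tau < t') by (unfold t'; apply Rmin_glb_lt; lra). lra. }
  assert (S t'); [|pose proof (Hub t' H); lra].
  split; [lra|]. intros s Hs. destruct (Rlt_le_dec s tau); [apply Hbefore; lra|].
  apply Hd', segment_near; auto. fold r. rewrite Rabs_minus_sym, Rabs_pos_eq; lra.
Qed.

(** * Schwarz's lemma and the growth bound for class H *)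

Lemma schwarz_quotient_le_inv_radius (f : C -> C) rho : classH f -> 0 < rho < 1 ->
  forall z, Cmod z <= rho -> Cmod (schwarz_quotient f z) <= 1 / rho.
Proof.
  intros Hf Hrho.
  destruct (closed_disk_max (fun z => Cmod (schwarz_quotient f z)) rho ltac:(lra)) as [zs [Hzs Hmax]].
  { intros z Hz eps Heps.
    destruct (schwarz_quotient_continuous f z Hf ltac:(lra) eps Heps) as [d [Hd Hd']].
    exists d. split; auto. intros w Hw. eapply Rle_lt_trans; [apply Cmod_reverse_triangle | auto]. }
  intros z Hz. eapply Rle_trans; [apply Hmax; auto|]. clear z Hz.
  set (gam := schwarz_quotient f zs).
  assert (Hrho_lt : Cmod (schwarz_quotient f (CR rho)) < 1 / rho).
  { pose proof (schwarz_quotient_lt_inv f (CR rho) Hf) as H. rewrite Cmod_R, Rabs_pos_eq in H by lra.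
    apply H; [lra|]. intros E. apply (f_equal fst) in E. simpl in E. lra. }
  destruct (Req_dec (Cmod zs) rho) as [Heq|Hne].
  { assert (zs <> CR 0) by (intros E; rewrite E, Cmod_0 in Heq; lra).
    pose proof (schwarz_quotient_lt_inv f zs Hf ltac:(lra) H). rewrite Heq in H0. unfold gam. lra. }
  destruct (classic (gam = CR 0)) as [Hg0|Hg0].
  { rewrite Hg0, Cmod_0. apply Rlt_le, Rdiv_lt_0_compat; lra. }
  (* The maximum is interior: rigidity makes h constant along the segment from zs to rho. *)
  assert (Hseg : forall t, 0 <= t <= 1 -> Cmod (segment zs (CR rho) t) <= (1 - t) * Cmod zs + t * rho).
  { intros t Ht. unfold segment.
    replace (zs + CR t * (CR rho - zs))%C with (CR (1 - t) * zs + CR (t * rho))%C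
      by (rewrite RtoC_minus, RtoC_mult; Cring).
    eapply Rle_trans; [apply Cmod_triangle|]. rewrite Cmod_mult, !Cmod_R, !Rabs_pos_eq; nra. }
  enough (schwarz_quotient f (CR rho) = gam) as <- by lra.
  apply (segment_value_propagates _ zs (CR rho) gam); auto.
  - intros t Ht. apply schwarz_quotient_continuous; auto. specialize (Hseg t Ht). nra.
  - intros t Ht Hval. specialize (Hseg t ltac:(lra)).
    assert (Hin : Cmod (segment zs (CR rho) t) < rho) by nra.
    apply schwarz_quotient_locally_constant; auto; [lra|].
    exists (rho - Cmod (segment zs (CR rho) t)). split; [lra|]. intros z Hz.
    apply Hmax. pose proof (Cmod_triangle (z - segment zs (CR rho) t) (segment zs (CR rho) t)).
    replace (z - segment zs (CR rho) t + segment zs (CR rho) t)%C with z in H by Cring. lra.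
Qed.

Lemma schwarz_quotient_le_1 (f : C -> C) z : classH f -> Cmod z < 1 -> Cmod (schwarz_quotient f z) <= 1.
Proof.
  intros Hf Hz. apply le_of_forall_lt_plus. intros e He.
  set (rho := Rmax (Cmod z) (1 / (1 + e / 2))).
  assert (H1 : 1 / (1 + e / 2) < 1) by (apply (Rmult_lt_reg_r (1 + e / 2)); [lra|]; field_simplify; lra).
  assert (Hrho : 0 < rho < 1).
  { split; [apply Rlt_le_trans with (1 / (1 + e / 2)); [apply Rdiv_lt_0_compat; lra | apply Rmax_r]|].
    apply Rmax_lub_lt; lra. }
  eapply Rle_lt_trans; [apply (schwarz_quotient_le_inv_radius f rho); auto; apply Rmax_l|].
  assert (1 / (1 + e / 2) <= rho) by apply Rmax_r.
  apply (Rmult_lt_reg_r rho); [lra|]. field_simplify; [|lra].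
  apply (Rmult_le_compat_l (1 + e / 2)) in H; [|lra]. field_simplify in H; lra.
Qed.

(* Schwarz's lemma for the Cayley transform (f - 1) / (f + 1), which vanishes at 0. *)
Lemma classH_schwarz (f : C -> C) z : classH f -> Cmod z < 1 -> Cmod (f z - CR 1) <= Cmod z * Cmod (f z + CR 1).
Proof.
  intros Hf Hz. destruct (classic (z = CR 0)) as [->|Hz0].
  - rewrite (classH_at_0 f Hf). replace (CR 1 - CR 1)%C with (CR 0) by Cring.
    rewrite !Cmod_0. lra.
  - rewrite <- (Cmod_schwarz_quotient f z Hf Hz Hz0).
    pose proof (schwarz_quotient_le_1 f z Hf Hz).
    pose proof (Cmod_ge_0 z). pose proof (Cmod_ge_0 (f z + CR 1)).
    assert (0 <= Cmod z * Cmod (f z + CR 1)) by nra. nra.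
Qed.

Lemma classH_growth (f : C -> C) z : classH f -> Cmod z < 1 -> Cmod (f z) <= (1 + Cmod z) / (1 - Cmod z).
Proof.
  intros Hf Hz. pose proof (classH_schwarz f z Hf Hz).
  pose proof (Cmod_triangle (f z - CR 1) (CR 1)). replace (f z - CR 1 + CR 1)%C with (f z) in H0 by Cring.
  pose proof (Cmod_triangle (f z) (CR 1)). rewrite Cmod_R, Rabs_R1 in H0, H1.
  pose proof (Cmod_ge_0 z).
  apply (Rmult_le_reg_r (1 - Cmod z)); [lra|]. field_simplify; [|lra].
  assert (Cmod z * Cmod (f z + CR 1) <= Cmod z * (Cmod (f z) + 1)) by (apply Rmult_le_compat_l; lra).
  nra.
Qed.

(** * Matrices *)

Lemma Csum_ext n (F G : nat -> C) : (forall k, (k < n)%nat -> F k = G k) -> Csum n F = Csum n G.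
Proof.
  intros H. induction n as [|n IH]; [reflexivity|].
  rewrite !Csum_S, IH, (H n) by (auto; intros; apply H; lia). reflexivity.
Qed.

Lemma Csum_add n (F G : nat -> C) : Csum n (fun k => F k + G k)%C = (Csum n F + Csum n G)%C.
Proof. induction n as [|n IH]; [simpl; coquelicot_ops; Cring|]. rewrite !Csum_S, IH. Cring. Qed.

Lemma Csum_mul_l n (a : C) (F : nat -> C) : (a * Csum n F)%C = Csum n (fun k => a * F k)%C.
Proof. induction n as [|n IH]; [simpl; coquelicot_ops; Cring|]. rewrite !Csum_S, <- IH. Cring. Qed.

Lemma Csum_mul_r n (a : C) (F : nat -> C) : (Csum n F * a)%C = Csum n (fun k => F k * a)%C.
Proof. induction n as [|n IH]; [simpl; coquelicot_ops; Cring|]. rewrite !Csum_S, <- IH. Cring. Qed.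

Lemma Csum_swap n m (F : nat -> nat -> C) :
  Csum n (fun i => Csum m (fun j => F i j)) = Csum m (fun j => Csum n (fun i => F i j)).
Proof.
  induction n as [|n IH].
  - symmetry. apply Csum_zero. reflexivity.
  - rewrite Csum_S, IH, <- Csum_add. reflexivity.
Qed.

Lemma Csum_delta_l n i (a : C) (G : nat -> C) : (i < n)%nat ->
  Csum n (fun k => (if Nat.eqb i k then a else CR 0) * G k)%C = (a * G i)%C.
Proof.
  induction n as [|n IH]; intros Hi; [lia|]. rewrite Csum_S.
  destruct (Nat.eq_dec i n) as [->|Hne].
  - rewrite Nat.eqb_refl, Csum_zero; [Cring|].
    intros k Hk. destruct (Nat.eqb_spec n k); [lia | Cring].
  - rewrite IH by lia. destruct (Nat.eqb_spec i n); [lia | Cring].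
Qed.

Lemma Csum_delta_r n j (a : C) (G : nat -> C) : (j < n)%nat ->
  Csum n (fun k => G k * (if Nat.eqb k j then a else CR 0))%C = (G j * a)%C.
Proof.
  intros Hj. rewrite (Csum_ext _ _ (fun k => (if Nat.eqb j k then a else CR 0) * G k)%C).
  - rewrite Csum_delta_l by auto. Cring.
  - intros k _. rewrite Nat.eqb_sym. Cring.
Qed.

Lemma Cconj_Csum n (F : nat -> C) : Cconj (Csum n F) = Csum n (fun k => Cconj (F k)).
Proof.
  induction n as [|n IH]; [apply injective_projections; simpl; ring|].
  rewrite !Csum_S, Cplus_conj, IH. reflexivity.
Qed.

Lemma RtoC_Rsum n (F : nat -> R) : CR (Rsum n F) = Csum n (fun i => CR (F i)).
Proof.
  induction n as [|n IH]; [reflexivity|]. simpl Rsum. rewrite Csum_S, <- IH, RtoC_plus. reflexivity.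
Qed.

Lemma Rsum_ext n (F G : nat -> R) : (forall k, (k < n)%nat -> F k = G k) -> Rsum n F = Rsum n G.
Proof.
  induction n as [|n IH]; intros H; [reflexivity|]. simpl. rewrite IH, H by (auto; intros; apply H; lia). reflexivity.
Qed.

Lemma Rsum_le n (F G : nat -> R) : (forall k, (k < n)%nat -> F k <= G k) -> Rsum n F <= Rsum n G.
Proof.
  induction n as [|n IH]; intros H; simpl; [lra|]. apply Rplus_le_compat; [apply IH; intros; apply H | apply H]; lia.
Qed.

Lemma mmul_entry n A B i j : mmul n A B i j = Csum n (fun k => A i k * B k j)%C.
Proof. reflexivity. Qed.

Lemma meq_refl n A : meq n A A.
Proof. intros i j _ _. reflexivity. Qed.

Lemma meq_sym n A B : meq n A B -> meq n B A.
Proof. intros H i j Hi Hj. symmetry. auto. Qed.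

Lemma meq_trans n A B C' : meq n A B -> meq n B C' -> meq n A C'.
Proof. intros H1 H2 i j Hi Hj. rewrite H1, H2 by auto. reflexivity. Qed.

Add Parametric Relation n : Mat (meq n)
  reflexivity proved by (meq_refl n) symmetry proved by (meq_sym n)
  transitivity proved by (meq_trans n) as meq_rel.

Add Parametric Morphism n : (mmul n) with signature (meq n) ==> (meq n) ==> (meq n) as mmul_mor.
Proof.
  intros A A' HA B B' HB i j Hi Hj. apply Csum_ext. intros k Hk. rewrite HA, HB by auto. reflexivity.
Qed.

Add Parametric Morphism n : madd with signature (meq n) ==> (meq n) ==> (meq n) as madd_mor.
Proof. intros A A' HA B B' HB i j Hi Hj. unfold madd. rewrite HA, HB by auto. reflexivity. Qed.

Add Parametric Morphism n : msub with signature (meq n) ==> (meq n) ==> (meq n) as msub_mor.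
Proof. intros A A' HA B B' HB i j Hi Hj. unfold msub. rewrite HA, HB by auto. reflexivity. Qed.

Add Parametric Morphism n r : (mscale r) with signature (meq n) ==> (meq n) as mscale_mor.
Proof. intros A A' HA i j Hi Hj. unfold mscale. rewrite HA by auto. reflexivity. Qed.

Add Parametric Morphism n : (hs_norm n) with signature (meq n) ==> eq as hs_norm_mor.
Proof.
  intros A A' HA. unfold hs_norm. f_equal.
  apply Rsum_ext. intros i Hi. apply Rsum_ext. intros j Hj. rewrite HA by auto. reflexivity.
Qed.

Lemma mmul_assoc n A B C' : meq n (mmul n (mmul n A B) C') (mmul n A (mmul n B C')).
Proof.
  intros i j _ _. rewrite !mmul_entry.
  transitivity (Csum n (fun l => Csum n (fun k => A i k * B k l * C' l j)%C)).
  - apply Csum_ext. intros l _. rewrite mmul_entry, Csum_mul_r. reflexivity.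
  - rewrite Csum_swap. apply Csum_ext. intros k _. rewrite mmul_entry, Csum_mul_l.
    apply Csum_ext. intros l _. Cring.
Qed.

Lemma mmul_id_l n A : meq n (mmul n mid A) A.
Proof.
  intros i j Hi Hj. rewrite mmul_entry. unfold mid. coquelicot_ops. rewrite Csum_delta_l by auto. Cring.
Qed.

Lemma mmul_id_r n A : meq n (mmul n A mid) A.
Proof.
  intros i j Hi Hj. rewrite mmul_entry. unfold mid. coquelicot_ops. rewrite Csum_delta_r by auto. Cring.
Qed.

Lemma mmul_add_l n A B C' : meq n (mmul n (madd A B) C') (madd (mmul n A C') (mmul n B C')).
Proof.
  intros i j _ _. unfold madd. rewrite !mmul_entry. coquelicot_ops. rewrite <- Csum_add. apply Csum_ext. intros; Cring.
Qed.

Lemma mmul_add_r n A B C' : meq n (mmul n A (madd B C')) (madd (mmul n A B) (mmul n A C')).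
Proof.
  intros i j _ _. unfold madd. rewrite !mmul_entry. coquelicot_ops. rewrite <- Csum_add. apply Csum_ext. intros; Cring.
Qed.

Lemma mmul_sub_l n A B C' : meq n (mmul n (msub A B) C') (msub (mmul n A C') (mmul n B C')).
Proof.
  intros i j _ _. unfold msub. rewrite !mmul_entry. coquelicot_ops.
  transitivity (Csum n (fun k => A i k * C' k j + (- (1)) * (B i k * C' k j))%C); [apply Csum_ext; intros; Cring|].
  rewrite Csum_add, <- Csum_mul_l. Cring.
Qed.

Lemma mmul_sub_r n A B C' : meq n (mmul n A (msub B C')) (msub (mmul n A B) (mmul n A C')).
Proof.
  intros i j _ _. unfold msub. rewrite !mmul_entry. coquelicot_ops.
  transitivity (Csum n (fun k => A i k * B k j + (- (1)) * (A i k * C' k j))%C); [apply Csum_ext; intros; Cring|].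
  rewrite Csum_add, <- Csum_mul_l. Cring.
Qed.

Lemma mmul_scale_l n r A B : meq n (mmul n (mscale r A) B) (mscale r (mmul n A B)).
Proof.
  intros i j _ _. unfold mscale. rewrite !mmul_entry. coquelicot_ops. rewrite Csum_mul_l. apply Csum_ext; intros; Cring.
Qed.

Lemma mmul_scale_r n r A B : meq n (mmul n A (mscale r B)) (mscale r (mmul n A B)).
Proof.
  intros i j _ _. unfold mscale. rewrite !mmul_entry. coquelicot_ops. rewrite Csum_mul_l. apply Csum_ext; intros; Cring.
Qed.

Lemma madj_mmul n A B : meq n (madj (mmul n A B)) (mmul n (madj B) (madj A)).
Proof.
  intros i j _ _. unfold madj. rewrite !mmul_entry. coquelicot_ops. rewrite Cconj_Csum.
  apply Csum_ext. intros k _. rewrite Cmult_conj. Cring.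
Qed.

Lemma madj_madj (A : Mat) : madj (madj A) = A.
Proof.
  apply functional_extensionality; intros i. apply functional_extensionality; intros j.
  unfold madj. coquelicot_ops. apply Cconj_conj.
Qed.

Lemma mmul_diag_l n d Y i j : (i < n)%nat -> mmul n (mdiag d) Y i j = (d i * Y i j)%C.
Proof.
  intros Hi. rewrite mmul_entry. unfold mdiag. coquelicot_ops. exact (Csum_delta_l n i (d i) (fun k => Y k j) Hi).
Qed.

Lemma mmul_diag_r n d Y i j : (j < n)%nat -> mmul n Y (mdiag d) i j = (Y i j * d j)%C.
Proof.
  intros Hj. rewrite mmul_entry. unfold mdiag. coquelicot_ops.
  rewrite (Csum_ext _ _ (fun k => Y i k * (if Nat.eqb k j then d j else CR 0))%C); [apply Csum_delta_r; auto|].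
  intros k _. destruct (Nat.eqb_spec k j); subst; reflexivity.
Qed.

Lemma mscale_id_add_diag (s : R) (a : nat -> C) :
  mscale s (madd mid (mdiag a)) = mdiag (fun i => CR s * (CR 1 + a i))%C.
Proof.
  apply functional_extensionality; intros i. apply functional_extensionality; intros j.
  unfold mscale, madd, mid, mdiag. coquelicot_ops. destruct (Nat.eqb i j); Cring.
Qed.

Lemma mscale_add_mmul_l n s A X :
  meq n (mscale s (madd X (mmul n A X))) (mmul n (mscale s (madd mid A)) X).
Proof. rewrite mmul_scale_l, mmul_add_l, mmul_id_l. reflexivity. Qed.

Lemma mscale_add_mmul_r n s A X :
  meq n (mscale s (madd X (mmul n X A))) (mmul n X (mscale s (madd mid A))).
Proof. rewrite mmul_scale_r, mmul_add_r, mmul_id_r. reflexivity. Qed.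

Definition mtrace n (M : Mat) : C := Csum n (fun i => M i i).

Add Parametric Morphism n : (mtrace n) with signature (meq n) ==> eq as mtrace_mor.
Proof. intros A B H. apply Csum_ext. intros k Hk. apply H; auto. Qed.

Lemma mtrace_mmul_comm n A B : mtrace n (mmul n A B) = mtrace n (mmul n B A).
Proof.
  unfold mtrace. rewrite (Csum_ext n _ (fun i => Csum n (fun k => A i k * B k i)%C)) by reflexivity.
  rewrite Csum_swap. apply Csum_ext. intros k _. rewrite mmul_entry. apply Csum_ext. intros; Cring.
Qed.

Lemma hs_norm_sq_mtrace n M :
  CR (Rsum n (fun i => Rsum n (fun j => Cnorm (M i j) ^ 2))) = mtrace n (mmul n M (madj M)).
Proof.
  rewrite RtoC_Rsum. apply Csum_ext. intros i _. rewrite RtoC_Rsum, mmul_entry.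
  apply Csum_ext. intros j _. unfold madj. coquelicot_ops. rewrite Cmod2_conj. reflexivity.
Qed.

Lemma unitary_cancel_l n U Z : unitary n U -> meq n (mmul n (madj U) (mmul n U Z)) Z.
Proof. intros [H _]. rewrite <- mmul_assoc, H. apply mmul_id_l. Qed.

Lemma unitary_cancel_r n U Z : unitary n U -> meq n (mmul n U (mmul n (madj U) Z)) Z.
Proof. intros [_ H]. rewrite <- mmul_assoc, H. apply mmul_id_l. Qed.

Definition msandwich n (U W M : Mat) : Mat := mmul n (mmul n U M) W.

Lemma hs_norm_msandwich n U V N : unitary n U -> unitary n V ->
  hs_norm n (msandwich n U (madj V) N) = hs_norm n N.
Proof.
  intros HU HV. set (M := msandwich n U (madj V) N).
  assert (Htr : mtrace n (mmul n M (madj M)) = mtrace n (mmul n N (madj N))).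
  { assert (E : meq n (mmul n M (madj M)) (mmul n U (mmul n (mmul n N (madj N)) (madj U)))).
    { unfold M, msandwich. rewrite madj_mmul, madj_mmul, madj_madj, !mmul_assoc, (unitary_cancel_l n V) by auto.
      reflexivity. }
    rewrite E, mtrace_mmul_comm, mmul_assoc, (proj1 HU), mmul_id_r. reflexivity. }
  unfold hs_norm. f_equal. rewrite <- !hs_norm_sq_mtrace in Htr. apply (f_equal fst) in Htr. exact Htr.
Qed.

Lemma hs_norm_le_entrywise n M N :
  (forall i j, (i < n)%nat -> (j < n)%nat -> Cmod (M i j) <= Cmod (N i j)) -> hs_norm n M <= hs_norm n N.
Proof.
  intros H. unfold hs_norm. apply sqrt_le_1_alt. apply Rsum_le. intros i Hi. apply Rsum_le. intros j Hj.
  coquelicot_ops. apply pow_incr. split; [apply Cmod_ge_0 | auto].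
Qed.

Lemma msandwich_add n U W M N : meq n (madd (msandwich n U W M) (msandwich n U W N)) (msandwich n U W (madd M N)).
Proof. unfold msandwich. rewrite mmul_add_r, mmul_add_l. reflexivity. Qed.

Lemma msandwich_sub n U W M N : meq n (msub (msandwich n U W M) (msandwich n U W N)) (msandwich n U W (msub M N)).
Proof. unfold msandwich. rewrite mmul_sub_r, mmul_sub_l. reflexivity. Qed.

Lemma msandwich_scale n U W r M : meq n (mscale r (msandwich n U W M)) (msandwich n U W (mscale r M)).
Proof. unfold msandwich. rewrite mmul_scale_r, mmul_scale_l. reflexivity. Qed.

Lemma msandwich_mmul_l n U W P M : unitary n U ->
  meq n (mmul n (msandwich n U (madj U) P) (msandwich n U W M)) (msandwich n U W (mmul n P M)).
Proof. intros HU. unfold msandwich. rewrite !mmul_assoc, (unitary_cancel_l n U) by auto. reflexivity. Qed.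

Lemma msandwich_mmul_r n U V M Q : unitary n V ->
  meq n (mmul n (msandwich n U (madj V) M) (msandwich n V (madj V) Q)) (msandwich n U (madj V) (mmul n M Q)).
Proof. intros HV. unfold msandwich. rewrite !mmul_assoc, (unitary_cancel_l n V) by auto. reflexivity. Qed.

Lemma msandwich_id n U : unitary n U -> meq n mid (msandwich n U (madj U) mid).
Proof. intros [_ H]. unfold msandwich. rewrite mmul_id_r. symmetry. exact H. Qed.

Lemma msandwich_unitary_coords n U V X : unitary n U -> unitary n V ->
  meq n X (msandwich n U (madj V) (mmul n (mmul n (madj U) X) V)).
Proof.
  intros HU [_ HV]. unfold msandwich. rewrite !mmul_assoc, (unitary_cancel_r n U) by auto.
  rewrite HV. symmetry. apply mmul_id_r.
Qed.

(** * The inequalities in the eigenbases *)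

Lemma madd_msub_entry (op : Mat -> Mat -> Mat) A B i j : op = madd \/ op = msub ->
  exists sgn : C, Cmod sgn = 1 /\ op A B i j = (A i j + sgn * B i j)%C.
Proof.
  intros [-> | ->].
  - exists (CR 1). split; [rewrite Cmod_R; apply Rabs_R1|]. unfold madd. coquelicot_ops. Cring.
  - exists (CR (-1)). split; [rewrite Cmod_R; unfold Rabs; destruct Rcase_abs; lra|].
    unfold msub. coquelicot_ops. Cring.
Qed.

Lemma hs_norm_diag_sum_le n (op : Mat -> Mat -> Mat) (p q : nat -> C) (a b : nat -> R) (Y : Mat) :
  op = madd \/ op = msub ->
  (forall i, (i < n)%nat -> Cmod (p i) <= a i) -> (forall j, (j < n)%nat -> Cmod (q j) <= b j) ->
  hs_norm n (op (mmul n (mdiag p) Y) (mmul n Y (mdiag q)))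
    <= hs_norm n (madd (mmul n (mdiag (fun i => CR (a i))) Y) (mmul n Y (mdiag (fun j => CR (b j))))).
Proof.
  intros Hop Hp Hq. apply hs_norm_le_entrywise. intros i j Hi Hj.
  destruct (madd_msub_entry op (mmul n (mdiag p) Y) (mmul n Y (mdiag q)) i j Hop) as [sgn [Hs ->]].
  unfold madd. rewrite !mmul_diag_l, !mmul_diag_r by auto. coquelicot_ops.
  specialize (Hp i Hi). specialize (Hq j Hj). pose proof (Cmod_ge_0 (p i)). pose proof (Cmod_ge_0 (q j)).
  replace (CR (a i) * Y i j + Y i j * CR (b j))%C with (CR (a i + b j) * Y i j)%C by (rewrite RtoC_plus; Cring).
  rewrite Cmod_scale_nonneg by lra.
  eapply Rle_trans; [apply Cmod_triangle|]. rewrite !Cmod_mult, Hs. pose proof (Cmod_ge_0 (Y i j)). nra.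
Qed.

Lemma hs_norm_diag_product_le n (op : Mat -> Mat -> Mat) (p q : nat -> C) (a b : nat -> R) (Y : Mat) :
  op = madd \/ op = msub ->
  (forall i, (i < n)%nat -> Cmod (p i) <= a i) -> (forall j, (j < n)%nat -> Cmod (q j) <= b j) ->
  hs_norm n (op (mmul n (mmul n (mdiag p) Y) (mdiag q)) Y)
    <= hs_norm n (madd (mmul n (mmul n (mdiag (fun i => CR (a i))) Y) (mdiag (fun j => CR (b j)))) Y).
Proof.
  intros Hop Hp Hq. apply hs_norm_le_entrywise. intros i j Hi Hj.
  destruct (madd_msub_entry op (mmul n (mmul n (mdiag p) Y) (mdiag q)) Y i j Hop) as [sgn [Hs ->]].
  unfold madd. rewrite !mmul_diag_r, !mmul_diag_l by auto. coquelicot_ops.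
  specialize (Hp i Hi). specialize (Hq j Hj). pose proof (Cmod_ge_0 (p i)). pose proof (Cmod_ge_0 (q j)).
  replace (CR (a i) * Y i j * CR (b j) + Y i j)%C with (CR (a i * b j + 1) * Y i j)%C
    by (rewrite RtoC_plus, RtoC_mult; Cring).
  rewrite Cmod_scale_nonneg by nra.
  eapply Rle_trans; [apply Cmod_triangle|]. rewrite !Cmod_mult, Hs. pose proof (Cmod_ge_0 (Y i j)).
  assert (Cmod (p i) * Cmod (q j) <= a i * b j) by (apply Rmult_le_compat; lra).
  nra.
Qed.

Lemma mindist_pos k lam : (forall j, (j < k)%nat -> Cnorm (RtoC (lam j)) < 1) -> 0 < mindist k lam.
Proof.
  induction k as [|k IH]; intros H; simpl; [lra|]. unfold dist_circle.
  apply Rmin_glb_lt; [apply IH; intros; apply H; lia | specialize (H k ltac:(lia)); lra].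
Qed.

Lemma mindist_le_dist k lam i : (i < k)%nat -> mindist k lam <= 1 - Rabs (lam i).
Proof.
  induction k as [|k IH]; intros H; simpl; [lia|]. unfold dist_circle. coquelicot_ops. rewrite <- Cmod_R.
  destruct (Nat.eq_dec i k) as [->|Hne]; [apply Rmin_r|].
  eapply Rle_trans; [apply Rmin_l | rewrite Cmod_R; apply IH; lia].
Qed.

Lemma classH_growth_real (f : C -> C) x d : classH f -> 0 < d <= 1 - Rabs x ->
  Cmod (f (CR x)) <= / d * (1 + sqrt (x ^ 2)).
Proof.
  intros Hf Hd. rewrite <- pow2_abs, sqrt_pow2 by apply Rabs_pos.
  pose proof (classH_growth f (CR x) Hf) as H. rewrite Cmod_R in H.
  eapply Rle_trans; [apply H; lra|]. unfold Rdiv. rewrite Rmult_comm.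
  apply Rmult_le_compat_r; [pose proof (Rabs_pos x); lra | apply Rinv_le_contravar; lra].
Qed.

Lemma hs_norm_sum_in_eigenbases n (op : Mat -> Mat -> Mat) U V D E X :
  unitary n U -> unitary n V -> op = madd \/ op = msub ->
  hs_norm n (op (mmul n (msandwich n U (madj U) D) X) (mmul n X (msandwich n V (madj V) E)))
  = hs_norm n (op (mmul n D (mmul n (mmul n (madj U) X) V)) (mmul n (mmul n (mmul n (madj U) X) V) E)).
Proof.
  intros HU HV Hop. set (Y := mmul n (mmul n (madj U) X) V).
  assert (HX : meq n X (msandwich n U (madj V) Y)) by (apply msandwich_unitary_coords; auto).
  destruct Hop as [-> | ->]; rewrite HX, msandwich_mmul_l, msandwich_mmul_r by auto;
    [rewrite msandwich_add | rewrite msandwich_sub]; apply hs_norm_msandwich; auto.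
Qed.

Lemma hs_norm_product_in_eigenbases n (op : Mat -> Mat -> Mat) U V D E X :
  unitary n U -> unitary n V -> op = madd \/ op = msub ->
  hs_norm n (op (mmul n (mmul n (msandwich n U (madj U) D) X) (msandwich n V (madj V) E)) X)
  = hs_norm n (op (mmul n (mmul n D (mmul n (mmul n (madj U) X) V)) E) (mmul n (mmul n (madj U) X) V)).
Proof.
  intros HU HV Hop. set (Y := mmul n (mmul n (madj U) X) V).
  assert (HX : meq n X (msandwich n U (madj V) Y)) by (apply msandwich_unitary_coords; auto).
  destruct Hop as [-> | ->]; rewrite HX, msandwich_mmul_l, msandwich_mmul_r by auto;
    [rewrite msandwich_add | rewrite msandwich_sub]; apply hs_norm_msandwich; auto.
Qed.

Lemma mscale_id_add_abs n U lam s : unitary n U ->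
  meq n (mscale s (madd mid (mabs n U lam)))
        (msandwich n U (madj U) (mdiag (fun j => CR (s * (1 + sqrt (lam j ^ 2)))))).
Proof.
  intros HU. change (mabs n U lam) with (msandwich n U (madj U) (mdiag (fun j => RtoC (sqrt (lam j ^ 2))))).
  rewrite (msandwich_id n U HU) at 1.
  rewrite msandwich_add, msandwich_scale, mscale_id_add_diag. unfold msandwich.
  apply mmul_mor; [apply mmul_mor|]; try reflexivity.
  intros i j _ _. unfold mdiag. destruct (Nat.eqb i j); [|reflexivity]. rewrite RtoC_mult, RtoC_plus. reflexivity.
Qed.

Theorem theorem3p3 (n : nat) (A B : Mat)
  (U : Mat) (lam : nat -> R) (V : Mat) (mu : nat -> R)
  (f g : Cx -> Cx) (X : Mat) :
  hermitian n A -> hermitian n B ->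
  unitary n U -> meq n A (mmul n (mmul n U (mdiag (fun j => RtoC (lam j)))) (madj U)) ->
  unitary n V -> meq n B (mmul n (mmul n V (mdiag (fun j => RtoC (mu j)))) (madj V)) ->
  (forall j, (j < n)%nat -> Cnorm (RtoC (lam j)) < 1) ->
  (forall j, (j < n)%nat -> Cnorm (RtoC (mu j)) < 1) ->
  classH f -> classH g ->
  let fA := fcalc n U lam f in
  let gB := fcalc n V mu g in
  let absA := mabs n U lam in
  let absB := mabs n V mu in
  let dA_ := dA n lam in
  let dB_ := dA n mu in
  let rhs1 := hs_norm n
      (madd (mscale (/ dA_) (madd X (mmul n absA X)))
            (mscale (/ dB_) (madd X (mmul n X absB)))) in
  let rhs2 := hs_norm n
      (madd (mmul n (mmul n (mscale (/ dA_) (madd mid absA)) X)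
                    (mscale (/ dB_) (madd mid absB)))
            X) in
  hs_norm n (madd (mmul n fA X) (mmul n X gB)) <= rhs1 /\
  hs_norm n (msub (mmul n fA X) (mmul n X gB)) <= rhs1 /\
  hs_norm n (madd (mmul n (mmul n fA X) gB) X) <= rhs2 /\
  hs_norm n (msub (mmul n (mmul n fA X) gB) X) <= rhs2.
Proof.
  (* Everything is expressed through the eigendecompositions. *)
  intros _ _ HU _ HV _ Hlam Hmu Hf Hg fA gB absA absB dA_ dB_ rhs1 rhs2.
  assert (HdA : 0 < dA_) by (apply mindist_pos; auto).
  assert (HdB : 0 < dB_) by (apply mindist_pos; auto).
  set (a := fun i => / dA_ * (1 + sqrt (lam i ^ 2))). set (b := fun j => / dB_ * (1 + sqrt (mu j ^ 2))).
  set (Y := mmul n (mmul n (madj U) X) V).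
  assert (HX : meq n X (msandwich n U (madj V) Y)) by (apply msandwich_unitary_coords; auto).
  assert (Ha : forall i, (i < n)%nat -> Cmod (f (CR (lam i))) <= a i).
  { intros i Hi. apply classH_growth_real; auto. split; [auto | apply mindist_le_dist; auto]. }
  assert (Hb : forall j, (j < n)%nat -> Cmod (g (CR (mu j))) <= b j).
  { intros j Hj. apply classH_growth_real; auto. split; [auto | apply mindist_le_dist; auto]. }
  set (Da := mdiag (fun i => CR (a i))). set (Db := mdiag (fun j => CR (b j))).
  assert (Erhs1 : rhs1 = hs_norm n (madd (mmul n Da Y) (mmul n Y Db))).
  { unfold rhs1, absA, absB. rewrite mscale_add_mmul_l, mscale_add_mmul_r, !mscale_id_add_abs, HX by auto.
    rewrite msandwich_mmul_l, msandwich_mmul_r, msandwich_add by auto. apply hs_norm_msandwich; auto. }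
  assert (Erhs2 : rhs2 = hs_norm n (madd (mmul n (mmul n Da Y) Db) Y)).
  { unfold rhs2, absA, absB. rewrite !mscale_id_add_abs, HX by auto.
    rewrite msandwich_mmul_l, msandwich_mmul_r, msandwich_add by auto. apply hs_norm_msandwich; auto. }
  assert (Hsum : forall op, op = madd \/ op = msub -> hs_norm n (op (mmul n fA X) (mmul n X gB)) <= rhs1).
  { intros op Hop.
    change fA with (msandwich n U (madj U) (mdiag (fun j => f (RtoC (lam j))))).
    change gB with (msandwich n V (madj V) (mdiag (fun j => g (RtoC (mu j))))).
    rewrite hs_norm_sum_in_eigenbases, Erhs1 by auto. apply hs_norm_diag_sum_le; auto. }
  assert (Hprod : forall op, op = madd \/ op = msub -> hs_norm n (op (mmul n (mmul n fA X) gB) X) <= rhs2).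
  { intros op Hop.
    change fA with (msandwich n U (madj U) (mdiag (fun j => f (RtoC (lam j))))).
    change gB with (msandwich n V (madj V) (mdiag (fun j => g (RtoC (mu j))))).
    rewrite hs_norm_product_in_eigenbases, Erhs2 by auto. apply hs_norm_diag_product_le; auto. }
  repeat split; auto.
Qed.
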